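(* Let $\Bbbk$ be a field of characteristic $0$, $B=\bigoplus_{s=1}^N\Bbbk e_s$ ($N\ge2$) a complete set of orthogonal idempotents in $A$, and let $\{\!\{-,-\}\!\}$ be an arbitrary $B$-linear double bracket on $A$. Let $A^f$ be the fusion algebra obtained by fusing $e_2$ onto $e_1$, with the induced double bracket $\{\!\{-,-\}\!\}_{ind}$, the double bracket $\{\!\{-,-\}\!\}_{fus}$, and $\{\!\{-,-\}\!\}^f=\{\!\{-,-\}\!\}_{ind}+\{\!\{-,-\}\!\}_{fus}$. Then the map $\kappa:(A^f)^{\times3}\to(A^f)^{\otimes3}$, $$\kappa=\{\!\{-,-,-\}\!\}^f-\{\!\{-,-,-\}\!\}_{ind}-\{\!\{-,-,-\}\!\}_{fus},$$ vanishes identically, where each term is the triple bracket associated with the corresponding double bracket.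
   Context: Conventions: $\otimes=\otimes_\Bbbk$; Sweedler notation $d=d'\otimes d''$; outer bimodule structure $b(a_1\otimes\cdots\otimes a_n)c=ba_1\otimes\cdots\otimes a_nc$. A $B$-linear double bracket is a $\Bbbk$-bilinear map $A\times A\to A\otimes A$ vanishing when an argument lies in $B$, with $\{\!\{a,b\}\!\}=-\{\!\{b,a\}\!\}''\otimes\{\!\{b,a\}\!\}'$ and $\{\!\{a,bc\}\!\}=\{\!\{a,b\}\!\}c+b\{\!\{a,c\}\!\}$. The triple bracket associated with a double bracket is $\{\!\{a,b,c\}\!\}=\{\!\{a,\{\!\{b,c\}\!\}'\}\!\}\otimes\{\!\{b,c\}\!\}''+\tau\{\!\{b,\{\!\{c,a\}\!\}'\}\!\}\otimes\{\!\{c,a\}\!\}''+\tau^2\{\!\{c,\{\!\{a,b\}\!\}'\}\!\}\otimes\{\!\{a,b\}\!\}''$ with $\tau(a_1\otimes a_2\otimes a_3)=a_3\otimes a_1\otimes a_2$. Fusion: $\mu=1-e_1-e_2$; $\mathrm{Mat}_2(\Bbbk)$ with matrix units $e_{11}=e_1,e_{12},e_{21},e_{22}=e_2$; $\bar A=A*_{\Bbbk e_1\oplus\Bbbk e_2\oplus\Bbbk\mu}(\mathrm{Mat}_2(\Bbbk)\oplus\Bbbk\mu)$; $\epsilon=1-e_2$; $A^f=\epsilon\bar A\epsilon$, an algebra over $B^f=\Bbbk e_1\oplus\bigoplus_{s\ge3}\Bbbk e_s$. $A^f$ is generated by $t$ ($t\in\epsilon A\epsilon$), $e_{12}u$ ($u\in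 e_2A\epsilon$), $ve_{21}$ ($v\in\epsilon Ae_2$), $e_{12}we_{21}$ ($w\in e_2Ae_2$), written $e_+\alpha e_-$ with $\alpha\in A$, $e_+\in\{\epsilon,e_{12}\}$, $e_-\in\{\epsilon,e_{21}\}$. $\{\!\{-,-\}\!\}_{ind}$ is the $B^f$-linear double bracket on $A^f$ with $\{\!\{e_+\alpha e_-,f_+\beta f_-\}\!\}_{ind}=f_+\{\!\{\alpha,\beta\}\!\}'e_-\otimes e_+\{\!\{\alpha,\beta\}\!\}''f_-$ on generators. $\operatorname{Tr}(E_1),\operatorname{Tr}(E_2)$ are the $B^f$-linear derivations $A^f\to A^f\otimes A^f$ with: $\operatorname{Tr}(E_1)(t)=te_1\otimes e_1-e_1\otimes e_1t$, $\operatorname{Tr}(E_2)(t)=0$; $\operatorname{Tr}(E_1)(e_{12}u)=e_{12}ue_1\otimes e_1$, $\operatorname{Tr}(E_2)(e_{12}u)=-e_1\otimes e_{12}u$; $\operatorname{Tr}(E_1)(ve_{21})=-e_1\otimes e_1ve_{21}$, $\operatorname{Tr}(E_2)(ve_{21})=ve_{21}\otimes e_1$; $\operatorname{Tr}(E_1)(e_{12}we_{21})=0$, $\operatorname{Tr}(E_2)(e_{12}we_{21})=e_{12}we_{21}e_1\otimes e_1-e_1\otimes e_1e_{12}we_{21}$. $\{\!\{a,b\}\!\}_{fus}=-\frac12\operatorname{Tr}(E_2)(b)'\operatorname{Tr}(E_1)(a)''\otimes\operatorname{Tr}(E_1)(a)'\operatorname{Tr}(E_2)(b)''+\frac12\operatorname{Tr}(E_1)(b)'\operatorname{Tr}(E_2)(a)''\otimes\operatorname{Tr}(E_2)(a)'\operatorname{Tr}(E_1)(b)''$.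 *)

From HB Require Import structures.
From mathcomp Require Import all_boot all_algebra.

Set Implicit Arguments.
Unset Strict Implicit.
Unset Printing Implicit Defensive.
Import GRing.Theory.
Local Open Scope ring_scope.

Section Tensors.
Variable K : fieldType.

Section OverModule.
Variable V : lmodType K.

(* A formal tensor  sum_i x_i (x) y_i  of V (x) V (scalars absorbed in x_i). *)
Definition tens2 := seq (V * V).
Definition tens3 := seq (V * V * V).

Definition bilinear_map (U : lmodType K) (f : V -> V -> U) : Prop :=
  (forall (a : K) x x' y, f (a *: x + x') y = a *: f x y + f x' y) /\
  (forall (a : K) x y y', f x (a *: y + y') = a *: f x y + f x y').

Definition trilinear_map (U : lmodType K) (f : V -> V -> V -> U) : Prop :=
  (forall (a : K) x x' y z, f (a *: x + x') y z = a *: f x y z + f x' y z) /\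
  (forall (a : K) x y y' z, f x (a *: y + y') z = a *: f x y z + f x y' z) /\
  (forall (a : K) x y z z', f x y (a *: z + z') = a *: f x y z + f x y z').

(* A formal tensor is zero in V (x) V iff it is killed by every bilinear map
   (universal property of the tensor product over K). *)
Definition tzero2 (t : tens2) : Prop :=
  forall (U : lmodType K) (f : V -> V -> U), bilinear_map f ->
    \sum_(p <- t) f p.1 p.2 = 0.

Definition tzero3 (t : tens3) : Prop :=
  forall (U : lmodType K) (f : V -> V -> V -> U), trilinear_map f ->
    \sum_(p <- t) f p.1.1 p.1.2 p.2 = 0.

Definition tneg2 (t : tens2) : tens2 := [seq (- p.1, p.2) | p <- t].
Definition tneg3 (t : tens3) : tens3 := [seq (- p.1.1, p.1.2, p.2) | p <- t].
Definition tscale2 (c : K) (t : tens2) : tens2 := [seq (c *: p.1, p.2) | p <- t].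
Definition teq2 (t s : tens2) : Prop := tzero2 (t ++ tneg2 s).
Definition teq3 (t s : tens3) : Prop := tzero3 (t ++ tneg3 s).
Definition tflip (t : tens2) : tens2 := [seq (p.2, p.1) | p <- t].
Definition tau3 (t : tens3) : tens3 := [seq (p.2, p.1.1, p.1.2) | p <- t].

End OverModule.

Section OverAlgebra.
Variable R : algType K.

(* outer bimodule structure: b (a1 (x) a2) c = b a1 (x) a2 c *)
Definition tlmul (b : R) (t : tens2 R) : tens2 R := [seq (b * p.1, p.2) | p <- t].
Definition trmul (t : tens2 R) (c : R) : tens2 R := [seq (p.1, p.2 * c) | p <- t].

(* [D] : the (sub)algebra on which the bracket lives, [inB] : membership in
   the base algebra of idempotents.  A B-linear double bracket on D with
   values in D (x) D. *)
Definition double_bracket (D inB : R -> Prop) (br : R -> R -> tens2 R) : Prop :=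
  [/\ (forall x y p, D x -> D y -> p \in br x y -> D p.1 /\ D p.2),
      (forall (a : K) x x' y, D x -> D x' -> D y ->
          teq2 (br (a *: x + x') y) (tscale2 a (br x y) ++ br x' y)),
      (forall (a : K) x y y', D x -> D y -> D y' ->
          teq2 (br x (a *: y + y')) (tscale2 a (br x y) ++ br x y')),
      (forall x y, D x -> D y -> inB x \/ inB y -> tzero2 (br x y)) &
      (forall x y, D x -> D y -> teq2 (br x y) (tneg2 (tflip (br y x))))] /\
  (
      (forall x y z, D x -> D y -> D z ->
          teq2 (br x (y * z)) (trmul (br x y) z ++ tlmul y (br x z)))).

Definition double_derivation (D inB : R -> Prop) (d : R -> tens2 R) : Prop :=
  [/\ (forall x p, D x -> p \in d x -> D p.1 /\ D p.2),
      (forall (a : K) x x', D x -> D x' ->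
          teq2 (d (a *: x + x')) (tscale2 a (d x) ++ d x')),
      (forall x, D x -> inB x -> tzero2 (d x)) &
      (forall x y, D x -> D y -> teq2 (d (x * y)) (trmul (d x) y ++ tlmul x (d y)))].

(* Sweedler: {{a, t'}} (x) t'' *)
Definition sweedler (br : R -> R -> tens2 R) (a : R) (t : tens2 R) : tens3 R :=
  flatten [seq [seq (q.1, q.2, p.2) | q <- br a p.1] | p <- t].

Definition triple_bracket (br : R -> R -> tens2 R) (a b c : R) : tens3 R :=
  sweedler br a (br b c) ++ tau3 (sweedler br b (br c a))
  ++ tau3 (tau3 (sweedler br c (br a b))).

Definition bracket_add (br1 br2 : R -> R -> tens2 R) : R -> R -> tens2 R :=
  fun x y => br1 x y ++ br2 x y.

Definition kappa (br1 br2 : R -> R -> tens2 R) (a b c : R) : tens3 R :=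
  triple_bracket (bracket_add br1 br2) a b c
  ++ tneg3 (triple_bracket br1 a b c) ++ tneg3 (triple_bracket br2 a b c).

(* {{a,b}}_fus built from the derivations Tr(E1), Tr(E2) *)
Definition fus_bracket (E1 E2 : R -> tens2 R) (a b : R) : tens2 R :=
  tscale2 (- (2%:R)^-1) [seq (q.1 * p.2, p.1 * q.2) | p <- E1 a, q <- E2 b]
  ++ tscale2 ((2%:R)^-1) [seq (q.1 * p.2, p.1 * q.2) | p <- E2 a, q <- E1 b].

End OverAlgebra.

Definition alg_hom (R S : algType K) (f : R -> S) : Prop :=
  [/\ (forall (a : K) x y, f (a *: x + y) = a *: f x + f y),
      (forall x y, f (x * y) = f x * f y) & f 1 = 1].

Definition matrix_units (S : algType K) (f11 f12 f21 f22 : S) : Prop :=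
  let f := fun i j : 'I_2 =>
    if val i == 0%N then (if val j == 0%N then f11 else f12)
    else (if val j == 0%N then f21 else f22) in
  forall i j k l : 'I_2, f i j * f k l = (if j == k then f i l else 0).

(* (Abar, iota, g12, g21) is the amalgamated free product
   A *_{K e1 + K e2 + K mu} (Mat_2(K) + K mu), mu = 1 - e1 - e2, where iota
   is the canonical map from A and g12, g21 are the images of the matrix
   units e12, e21 (e11, e22 being identified with e1, e2): universal
   property of the pushout of K-algebras. *)
Definition is_fusion_product (A : algType K) (e1 e2 : A)
    (Abar : algType K) (iota : A -> Abar) (g12 g21 : Abar) : Prop :=
  [/\ alg_hom iota, matrix_units (iota e1) g12 g21 (iota e2) &
      forall (S : algType K) (phi : A -> S) (h12 h21 : S),
        alg_hom phi -> matrix_units (phi e1) h12 h21 (phi e2) ->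
        exists psi : Abar -> S,
          [/\ alg_hom psi, (forall a, psi (iota a) = phi a),
              psi g12 = h12, psi g21 = h21 &
              forall psi' : Abar -> S,
                [/\ alg_hom psi', (forall a, psi' (iota a) = phi a),
                    psi' g12 = h12 & psi' g21 = h21] ->
                forall x, psi' x = psi x]].

Section Fusion.
Variables (A : algType K) (N : nat) (e : nat -> A).
Variables (Abar : algType K) (iota : A -> Abar) (g12 g21 : Abar).

Definition inB (x : A) : Prop :=
  exists c : nat -> K, x = \sum_(1 <= s < N.+1) c s *: e s.

Definition idempotent_system : Prop :=
  [/\ (forall s, (1 <= s <= N)%N -> e s != 0),
      (forall s t, (1 <= s <= N)%N -> (1 <= t <= N)%N ->
          e s * e t = (if s == t then e s else 0)) &
      \sum_(1 <= s < N.+1) e s = 1].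

(* epsilon = 1 - e_2 in Abar, and A^f = epsilon Abar epsilon *)
Definition epsf : Abar := 1 - iota (e 2).
Definition inAf (x : Abar) : Prop := epsf * x * epsf = x.

Definition inBf (x : Abar) : Prop :=
  exists c : nat -> K,
    x = c 1%N *: iota (e 1) + \sum_(3 <= s < N.+1) c s *: iota (e s).

(* e_+ in {epsilon, e12} (true = e12), e_- in {epsilon, e21} (true = e21) *)
Definition eplus (sp : bool) : Abar := if sp then g12 else epsf.
Definition eminus (sm : bool) : Abar := if sm then g21 else epsf.
Definition idemL (sp : bool) : A := if sp then e 2 else 1 - e 2.
Definition idemR (sm : bool) : A := if sm then e 2 else 1 - e 2.
Definition corner (sp sm : bool) (alpha : A) : Prop :=
  idemL sp * alpha * idemR sm = alpha.
Definition gen (sp sm : bool) (alpha : A) : Abar :=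
  eplus sp * iota alpha * eminus sm.

Definition ind_on_generators (br : A -> A -> tens2 A)
    (ind : Abar -> Abar -> tens2 Abar) : Prop :=
  forall (sp sm tp tm : bool) (alpha beta : A),
    corner sp sm alpha -> corner tp tm beta ->
    teq2 (ind (gen sp sm alpha) (gen tp tm beta))
      [seq (eplus tp * iota p.1 * eminus sm, eplus sp * iota p.2 * eminus tm)
         | p <- br alpha beta].

(* values of Tr(E1), Tr(E2) on the generators
   t (F,F), e12 u (T,F), v e21 (F,T), e12 w e21 (T,T) *)
Definition TrE1_on_generators (E1 : Abar -> tens2 Abar) : Prop :=
  forall (sp sm : bool) (alpha : A), corner sp sm alpha ->
    let x := gen sp sm alpha in
    let f1 := iota (e 1) in
    teq2 (E1 x)
      (match sp, sm with
       | false, false => [:: (x * f1, f1); (- f1, f1 * x)]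
       | true, false => [:: (x * f1, f1)]
       | false, true => [:: (- f1, f1 * x)]
       | true, true => [::]
       end).

Definition TrE2_on_generators (E2 : Abar -> tens2 Abar) : Prop :=
  forall (sp sm : bool) (alpha : A), corner sp sm alpha ->
    let x := gen sp sm alpha in
    let f1 := iota (e 1) in
    teq2 (E2 x)
      (match sp, sm with
       | false, false => [::]
       | true, false => [:: (- f1, x)]
       | false, true => [:: (x, f1)]
       | true, true => [:: (x * f1, f1); (- f1, f1 * x)]
       end).

End Fusion.

End Tensors.

(* Expanding the
   triple bracket of [{{-,-}}_ind + {{-,-}}_fus], the difference [kappa]
   consists of the six mixed terms [{{a, {{b,c}}'_fus}}_ind (x) {{b,c}}''_fus],
   [{{a, {{b,c}}'_ind}}_fus (x) {{b,c}}''_ind] and their cyclic permutations.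
   The triple bracket of a double bracket is cyclically invariant and, since
   the cross terms of the Leibniz rule cancel by skew-symmetry, a derivation in
   its last argument; hence so is [kappa], and it suffices to show that it
   vanishes on the generators [e_+ alpha e_-] of [A^f], which generate [A^f] by
   the universal property of the fusion product.  On generators [{{-,-}}_fus]
   is an explicit combination of products of the generators with [e_1], and
   [{{x, e_1}}_ind = 0] because [e_1] lies in [B^f].  Expanding by the Leibniz
   rule, the mixed terms containing [{{a,b}}_ind], [{{b,a}}_ind] and
   [{{c, {{a,b}}'_ind}}_fus] cancel, and likewise for the other two pairs. *)

From HB Require Import structures.
From mathcomp Require Import all_boot all_algebra ring.
From Stdlib Require Import ClassicalEpsilon.

Set Implicit Arguments.
Unset Strict Implicit.
Unset Printing Implicit Defensive.
Import GRing.Theory.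
Local Open Scope ring_scope.

Section AlgHom.
Variables (K : fieldType) (R S : algType K) (f : R -> S).
Hypothesis hf : alg_hom f.

Lemma alg_homZD (k : K) x y : f (k *: x + y) = k *: f x + f y.
Proof. by case: hf. Qed.
Lemma alg_homM x y : f (x * y) = f x * f y.
Proof. by case: hf. Qed.
Lemma alg_hom1 : f 1 = 1.
Proof. by case: hf. Qed.
Lemma alg_hom0 : f 0 = 0.
Proof.
have := alg_homZD 1 0 0; rewrite !scale1r !addr0 => f0.
by apply: (addrI (f 0)); rewrite addr0 -f0.
Qed.
Lemma alg_homD x y : f (x + y) = f x + f y.
Proof. by rewrite -[x in LHS]scale1r alg_homZD scale1r. Qed.
Lemma alg_homZ (k : K) x : f (k *: x) = k *: f x.
Proof. by rewrite -[k *: x]addr0 alg_homZD alg_hom0 addr0. Qed.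
Lemma alg_homN x : f (- x) = - f x.
Proof. by rewrite -scaleN1r alg_homZ scaleN1r. Qed.
Lemma alg_homB x y : f (x - y) = f x - f y.
Proof. by rewrite alg_homD alg_homN. Qed.

End AlgHom.

Section ClosedSubalgebra.
Variables (K : fieldType) (R : algType K) (G : R -> Prop).

Definition subalg_prop : Prop :=
  [/\ G 1, forall (k : K) x y, G x -> G y -> G (k *: x + y) &
      forall x y, G x -> G y -> G (x * y)].

Variable closedG : subalg_prop.

(* The dummy dependency on [closedG] makes the canonical instances below
   depend on it, so that they survive the closing of the section. *)
Definition subalg_mem (x : R) : bool :=
  let _ := closedG in if excluded_middle_informative (G x) then true else false.

Lemma subalg_memP x : reflect (G x) (subalg_mem x).
Proof. by rewrite /subalg_mem; case: excluded_middle_informative; constructor. Qed.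

Fact subalg_mem_closed : subalg_closed subalg_mem.
Proof.
case: closedG => G1 GZD GM; split; first exact/subalg_memP.
- by move=> k x y /subalg_memP Gx /subalg_memP Gy; apply/subalg_memP/GZD.
- by move=> x y /subalg_memP Gx /subalg_memP Gy; apply/subalg_memP/GM.
Qed.
HB.instance Definition _ := GRing.isSubalgClosed.Build K R subalg_mem
  (GRing.subalg_closed_semi subalg_mem_closed).

Record subalg : predArgType := Subalg { subalg_val :> R; _ : subalg_mem subalg_val }.
HB.instance Definition _ := [isSub for subalg_val].
HB.instance Definition _ := [Choice of subalg by <:].
HB.instance Definition _ := [SubChoice_isSubAlgebra of subalg by <:].

Lemma subalg_valP (x : subalg) : G x.
Proof. by case: x => y /= /subalg_memP. Qed.

End ClosedSubalgebra.

Section FusionProductInduction.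
Variables (K : fieldType) (A Abar : algType K) (e1 e2 : A).
Variables (iota : A -> Abar) (g12 g21 : Abar).
Hypothesis hfus : is_fusion_product e1 e2 iota g12 g21.

(* Apply the universal property to the subalgebra [G]; uniqueness forces the
   composite [Abar -> G -> Abar] to be the identity. *)
Lemma fusion_product_ind (G : Abar -> Prop) : subalg_prop G ->
  (forall a, G (iota a)) -> G g12 -> G g21 -> forall x, G x.
Proof.
move=> closedG Giota G12 G21; case: hfus => iota_hom mu univ.
pose S := subalg closedG.
pose mk x (Gx : G x) : S := Subalg (introT (subalg_memP closedG x) Gx).
have val_inj_S : injective (subalg_val (closedG := closedG)) by exact: val_inj.
have phi_hom : alg_hom (fun a => mk _ (Giota a)).
  by split=> [k x y|x y|]; apply: val_inj_S; rewrite /= ?alg_homZD ?alg_homM ?alg_hom1.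
have phi_mu : matrix_units (mk _ (Giota e1)) (mk _ G12) (mk _ G21) (mk _ (Giota e2)).
  move=> i j k l; apply: val_inj_S; have /= := mu i j k l.
  by case: (val i == 0%N); case: (val j == 0%N); case: (val k == 0%N);
     case: (val l == 0%N); case: (j == k).
have [psi [psi_hom psi_iota psi12 psi21 _]] := univ _ _ _ _ phi_hom phi_mu.
have [id' [_ _ _ _ uniq_id]] := univ _ _ _ _ iota_hom mu.
have psi_val : [/\ alg_hom (fun y => subalg_val (psi y)),
    forall a, subalg_val (psi (iota a)) = iota a,
    subalg_val (psi g12) = g12 & subalg_val (psi g21) = g21].
  split=> [|a||]; rewrite /= ?psi_iota ?psi12 ?psi21 //.
  by split=> [k y z|y z|]; rewrite /= ?alg_homZD ?alg_homM ?alg_hom1.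
have id_ok : [/\ alg_hom (@id Abar), forall a, iota a = iota a, g12 = g12 & g21 = g21].
  by split.
move=> x; have -> : x = subalg_val (psi x).
  by rewrite (uniq_id _ psi_val x) -(uniq_id _ id_ok x).
exact: subalg_valP.
Qed.

End FusionProductInduction.

Section LinearCombination.
Variables (K : fieldType) (U : lmodType K).

Definition lincomb (xs : seq U) (c : nat -> K) : U := \sum_(i < size xs) c i *: xs`_i.

Lemma lincombD xs c d : lincomb xs c + lincomb xs d = lincomb xs (fun i => c i + d i).
Proof. by rewrite /lincomb -big_split; apply: eq_bigr => i _; rewrite scalerDl. Qed.
Lemma lincombZ xs (k : K) c : k *: lincomb xs c = lincomb xs (fun i => k * c i).
Proof. by rewrite /lincomb scaler_sumr; apply: eq_bigr => i _; rewrite scalerA. Qed.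
Lemma lincombN xs c : - lincomb xs c = lincomb xs (fun i => - c i).
Proof. by rewrite /lincomb -sumrN; apply: eq_bigr => i _; rewrite scaleNr. Qed.
Lemma lincomb_nth xs j : (j < size xs)%N -> xs`_j = lincomb xs (fun i => (i == j)%:R).
Proof.
move=> ltj; rewrite /lincomb (bigD1 (Ordinal ltj)) //= eqxx scale1r big1 ?addr0 //.
by move=> i /negbTE; rewrite -val_eqE /= => ->; rewrite scale0r.
Qed.
Lemma lincomb_eq0 xs c : (forall i, c i = 0) -> lincomb xs c = 0.
Proof. by move=> c0; rewrite /lincomb big1 // => i _; rewrite c0 scale0r. Qed.

End LinearCombination.

Ltac lincomb_atoms xs i atoms :=
  lazymatch atoms with
  | ?a :: ?rest =>
      (have -> : a = lincomb xs (fun j => (j == i)%:R) by apply: (@lincomb_nth _ _ xs i));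
      let j := constr:(S i) in lincomb_atoms xs j rest
  | [::] => idtac
  end.

(* Proves an identity between [K]-linear combinations of the given atoms (at
   most 13) of a [K]-module by comparing their coefficients with [ring]. *)
Ltac lincomb atoms :=
  let xs := fresh "xs" in
  pose xs := atoms; lincomb_atoms xs 0%N atoms;
  apply/eqP; rewrite -subr_eq0 ?subr0; apply/eqP;
  repeat rewrite ?lincombD ?lincombZ ?lincombN;
  apply: lincomb_eq0; let i := fresh "i" in
  intro i; do 13 (try (destruct i as [|i])); simpl; ring.

Section TensorEvaluation.
Variables (K : fieldType) (V U : lmodType K).
Implicit Types (t s : tens2 V) (h : V -> V -> U).

Definition teval2 t h : U := \sum_(p <- t) h p.1 p.2.
Definition teval3 (t : tens3 V) (f : V -> V -> V -> U) : U :=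
  \sum_(p <- t) f p.1.1 p.1.2 p.2.

Lemma teval2_nil h : teval2 [::] h = 0.
Proof. by rewrite /teval2 big_nil. Qed.
Lemma teval2_cons p t h : teval2 (p :: t) h = h p.1 p.2 + teval2 t h.
Proof. by rewrite /teval2 big_cons. Qed.
Lemma teval2_cat t s h : teval2 (t ++ s) h = teval2 t h + teval2 s h.
Proof. by rewrite /teval2 big_cat. Qed.
Lemma teval3_cat (t s : tens3 V) f : teval3 (t ++ s) f = teval3 t f + teval3 s f.
Proof. by rewrite /teval3 big_cat. Qed.

Lemma eq_teval2 t h h' : (forall x y, h x y = h' x y) -> teval2 t h = teval2 t h'.
Proof. by move=> eqh; apply: eq_bigr => p _; rewrite eqh. Qed.
Lemma eq_in_teval2 t h h' :
  (forall p, p \in t -> h p.1 p.2 = h' p.1 p.2) -> teval2 t h = teval2 t h'.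
Proof.
by move=> eqh; rewrite /teval2 !big_seq; apply: eq_bigr => p /eqh.
Qed.

Lemma teval2D t h h' : teval2 t (fun x y => h x y + h' x y) = teval2 t h + teval2 t h'.
Proof. exact: big_split. Qed.
Lemma teval2Z t (k : K) h : teval2 t (fun x y => k *: h x y) = k *: teval2 t h.
Proof. by rewrite /teval2 scaler_sumr. Qed.
Lemma teval2N t h : teval2 t (fun x y => - h x y) = - teval2 t h.
Proof. exact: sumrN. Qed.
Lemma teval2_0 t : teval2 t (fun _ _ => 0 : U) = 0.
Proof. exact: big1. Qed.
Lemma teval2_tflip t h : teval2 (tflip t) h = teval2 t (fun x y => h y x).
Proof. by rewrite /teval2 big_map. Qed.
Lemma teval2_exchange t s (H : V -> V -> V -> V -> U) :
  teval2 t (fun p1 p2 => teval2 s (H p1 p2)) =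
  teval2 s (fun q1 q2 => teval2 t (fun p1 p2 => H p1 p2 q1 q2)).
Proof. exact: exchange_big. Qed.

Lemma bilinear_teval2 t (H : V -> V -> V -> V -> U) :
  (forall u v, bilinear_map (fun x z => H x z u v)) ->
  bilinear_map (fun x z => teval2 t (H x z)).
Proof.
move=> bilH; split=> k *; rewrite -teval2Z -teval2D; apply: eq_teval2 => u v;
  by case: (bilH u v) => [H1 H2]; rewrite ?H1 ?H2.
Qed.

Section Bilinear.
Variable h : V -> V -> U.
Hypothesis bh : bilinear_map h.

Lemma bilin0l y : h 0 y = 0.
Proof.
case: bh => H1 _; have := H1 1 0 0 y; rewrite !scale1r !addr0 => h0.
by apply: (addrI (h 0 y)); rewrite addr0 -h0.
Qed.
Lemma bilinZl (k : K) x y : h (k *: x) y = k *: h x y.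
Proof. by case: bh => H1 _; rewrite -[k *: x]addr0 H1 bilin0l addr0. Qed.
Lemma bilinNl x y : h (- x) y = - h x y.
Proof. by rewrite -scaleN1r bilinZl scaleN1r. Qed.

Lemma teval2_tneg2 t : teval2 (tneg2 t) h = - teval2 t h.
Proof. by rewrite /teval2 big_map -sumrN; apply: eq_bigr => p _; rewrite bilinNl. Qed.
Lemma teval2_tscale2 (k : K) t : teval2 (tscale2 k t) h = k *: teval2 t h.
Proof. by rewrite /teval2 big_map scaler_sumr; apply: eq_bigr => p _; rewrite bilinZl. Qed.

End Bilinear.

Lemma eq_bilinear h h' : bilinear_map h -> (forall x y, h x y = h' x y) -> bilinear_map h'.
Proof. by move=> [H1 H2] eqh; split=> *; rewrite -!eqh; [apply: H1 | apply: H2]. Qed.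

Lemma bilinear_flip h : bilinear_map h -> bilinear_map (fun x y => h y x).
Proof. by case=> H1 H2; split=> *; [apply: H2 | apply: H1]. Qed.
Lemma bilinearD h h' : bilinear_map h -> bilinear_map h' ->
  bilinear_map (fun x y => h x y + h' x y).
Proof.
by move=> [H1 H2] [H1' H2']; split=> *; rewrite ?H1 ?H1' ?H2 ?H2' scalerDr addrACA.
Qed.
Lemma bilinearZ h (k : K) : bilinear_map h -> bilinear_map (fun x y => k *: h x y).
Proof. by move=> [H1 H2]; split=> *; rewrite ?H1 ?H2 scalerDr !scalerA mulrC. Qed.

Definition linear_map (phi : V -> V) := forall (k : K) x y, phi (k *: x + y) = k *: phi x + phi y.

Lemma bilinear_comp h (phi psi : V -> V) : bilinear_map h -> linear_map phi -> linear_map psi ->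
  bilinear_map (fun x y => h (phi x) (psi y)).
Proof. by move=> [H1 H2] lphi lpsi; split=> *; rewrite ?lphi ?lpsi ?H1 ?H2. Qed.

Section Trilinear.
Variable f : V -> V -> V -> U.
Hypothesis tf : trilinear_map f.

Lemma trilinear_bil12 z : bilinear_map (fun x y => f x y z).
Proof. by case: tf => H1 [H2 _]; split=> *; [apply: H1 | apply: H2]. Qed.
Lemma trilinear_bil13 y : bilinear_map (fun x z => f x y z).
Proof. by case: tf => H1 [_ H3]; split=> *; [apply: H1 | apply: H3]. Qed.
Lemma trilinear_bil23 x : bilinear_map (fun y z => f x y z).
Proof. by case: tf => _ [H2 H3]; split=> *; [apply: H2 | apply: H3]. Qed.

Lemma teval3_tneg3 (t : tens3 V) : teval3 (tneg3 t) f = - teval3 t f.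
Proof.
rewrite /teval3 big_map -sumrN; apply: eq_bigr => p _ /=.
exact: (bilinNl (trilinear_bil12 p.2)).
Qed.

End Trilinear.

Lemma trilinear_rot (f : V -> V -> V -> U) : trilinear_map f -> trilinear_map (fun x y z => f z x y).
Proof. by case=> H1 [H2 H3]; split; [|split] => * /=; [apply: H2 | apply: H3 | apply: H1]. Qed.

End TensorEvaluation.

Lemma teq2_teval (K : fieldType) (V U : lmodType K) (t s : tens2 V) (h : V -> V -> U) :
  teq2 t s -> bilinear_map h -> teval2 t h = teval2 s h.
Proof.
move=> ts bh; apply/eqP; rewrite -subr_eq0 -(teval2_tneg2 bh) -teval2_cat.
exact/eqP/ts.
Qed.

Lemma tzero2_teval (K : fieldType) (V U : lmodType K) (t : tens2 V) (h : V -> V -> U) :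
  tzero2 t -> bilinear_map h -> teval2 t h = 0.
Proof. by move=> t0 bh; apply: t0. Qed.

Lemma teval2_teq2 (K : fieldType) (V : lmodType K) (t s : tens2 V) :
  (forall (U : lmodType K) (h : V -> V -> U), bilinear_map h -> teval2 t h = teval2 s h) ->
  teq2 t s.
Proof.
move=> ts U h bh; rewrite -/(teval2 _ h) teval2_cat teval2_tneg2 // ts //.
exact: subrr.
Qed.

Section OuterBimodule.
Variables (K : fieldType) (R : algType K) (U : lmodType K).
Implicit Types (t : tens2 R) (h : R -> R -> U).

Lemma teval2_trmul t z h : teval2 (trmul t z) h = teval2 t (fun u v => h u (v * z)).
Proof. by rewrite /teval2 big_map. Qed.
Lemma teval2_tlmul t z h : teval2 (tlmul z t) h = teval2 t (fun u v => h (z * u) v).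
Proof. by rewrite /teval2 big_map. Qed.

End OuterBimodule.

Section Corner.
Variables (K : fieldType) (R : algType K) (eps : R).
Hypothesis eps_idem : eps * eps = eps.

Definition in_corner (x : R) : Prop := eps * x * eps = x.
Definition corner_proj (x : R) : R := eps * x * eps.
Definition corner_tensor (t : tens2 R) : Prop :=
  forall p, p \in t -> in_corner p.1 /\ in_corner p.2.

Lemma corner_mull x : in_corner x -> eps * x = x.
Proof. by move=> <-; rewrite !mulrA eps_idem. Qed.
Lemma corner_mulr x : in_corner x -> x * eps = x.
Proof. by move=> <-; rewrite -!mulrA eps_idem. Qed.
Lemma in_corner_proj x : in_corner (corner_proj x).
Proof. by rewrite /in_corner /corner_proj !mulrA eps_idem -!mulrA eps_idem. Qed.
Lemma corner_projE x : in_corner x -> corner_proj x = x.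
Proof. by []. Qed.

Lemma linear_mulr a : linear_map (fun x : R => x * a).
Proof. by move=> k x y; rewrite mulrDl -scalerAl. Qed.
Lemma linear_mull a : linear_map (fun x : R => a * x).
Proof. by move=> k x y; rewrite mulrDr -scalerAr. Qed.
Lemma linear_corner_proj : linear_map corner_proj.
Proof. by move=> k x y; rewrite /corner_proj linear_mull linear_mulr. Qed.

Lemma in_cornerZD (k : K) x y : in_corner x -> in_corner y -> in_corner (k *: x + y).
Proof. by rewrite /in_corner -!/(corner_proj _) linear_corner_proj => -> ->. Qed.
Lemma in_corner0 : in_corner 0.
Proof. by rewrite /in_corner mulr0 mul0r. Qed.
Lemma in_cornerZ (k : K) x : in_corner x -> in_corner (k *: x).
Proof. by move=> cx; rewrite -[_ *: _]addr0; apply: in_cornerZD cx in_corner0. Qed.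
Lemma in_cornerN x : in_corner x -> in_corner (- x).
Proof. by rewrite -scaleN1r; apply: in_cornerZ. Qed.
Lemma in_cornerM x y : in_corner x -> in_corner y -> in_corner (x * y).
Proof. by move=> cx cy; rewrite /in_corner mulrA corner_mull // -mulrA corner_mulr. Qed.

Lemma corner_tensor_cat t s : corner_tensor t -> corner_tensor s -> corner_tensor (t ++ s).
Proof. by move=> ct cs p; rewrite mem_cat => /orP[/ct | /cs]. Qed.
Lemma corner_tensor_tscale2 (k : K) t : corner_tensor t -> corner_tensor (tscale2 k t).
Proof. by move=> ct p /mapP[q /ct[c1 c2] ->]; split=> //; apply: in_cornerZ. Qed.
Lemma corner_tensor_tneg2 t : corner_tensor t -> corner_tensor (tneg2 t).
Proof. by move=> ct p /mapP[q /ct[c1 c2] ->]; split=> //; apply: in_cornerN. Qed.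
Lemma corner_tensor_tflip t : corner_tensor t -> corner_tensor (tflip t).
Proof. by move=> ct p /mapP[q /ct[c1 c2] ->]. Qed.
Lemma corner_tensor_trmul t z : corner_tensor t -> in_corner z -> corner_tensor (trmul t z).
Proof. by move=> ct cz p /mapP[q /ct[c1 c2] ->]; split=> //; apply: in_cornerM. Qed.
Lemma corner_tensor_tlmul t z : corner_tensor t -> in_corner z -> corner_tensor (tlmul z t).
Proof. by move=> ct cz p /mapP[q /ct[c1 c2] ->]; split=> //; apply: in_cornerM. Qed.
Lemma corner_tensor_cons x y t : in_corner x -> in_corner y -> corner_tensor t ->
  corner_tensor ((x, y) :: t).
Proof. by move=> cx cy ct p; rewrite inE => /orP[/eqP -> // | /ct]. Qed.

Section CornerBilinear.
Variable U : lmodType K.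
Implicit Types (h : R -> R -> U) (t s : tens2 R).

(* Tensors of the corner only need to be tested against maps that are bilinear
   on the corner; precomposing with [corner_proj] extends them to [R]. *)
Definition corner_bilinear h := bilinear_map (fun x y => h (corner_proj x) (corner_proj y)).

Lemma bilinear_corner h : bilinear_map h -> corner_bilinear h.
Proof. by move=> bh; apply: bilinear_comp bh linear_corner_proj linear_corner_proj. Qed.

Lemma corner_bilinear_comp h (phi psi : R -> R) : corner_bilinear h ->
  linear_map phi -> linear_map psi ->
  (forall x, in_corner x -> in_corner (phi x)) -> (forall x, in_corner x -> in_corner (psi x)) ->
  corner_bilinear (fun x y => h (phi x) (psi y)).
Proof.
move=> bh lphi lpsi cphi cpsi.
have lin_proj g : linear_map g -> linear_map (fun x => g (corner_proj x)).
  by move=> lg k x y; rewrite linear_corner_proj lg.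
apply: (eq_bilinear (bilinear_comp bh (lin_proj _ lphi) (lin_proj _ lpsi))) => x y /=.
by rewrite (corner_projE (cphi _ (in_corner_proj x))) (corner_projE (cpsi _ (in_corner_proj y))).
Qed.

Lemma corner_bilinear_flip h : corner_bilinear h -> corner_bilinear (fun x y => h y x).
Proof. exact: bilinear_flip. Qed.
Lemma corner_bilinearD h h' : corner_bilinear h -> corner_bilinear h' ->
  corner_bilinear (fun x y => h x y + h' x y).
Proof. exact: bilinearD. Qed.
Lemma corner_bilinearZ h (k : K) : corner_bilinear h -> corner_bilinear (fun x y => k *: h x y).
Proof. exact: bilinearZ. Qed.

Lemma corner_bilinearN h : corner_bilinear h -> corner_bilinear (fun x y => - h x y).
Proof. by move=> bh; apply: (eq_bilinear (bilinearZ (-1) bh)) => x y; rewrite scaleN1r. Qed.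

Lemma corner_bilinearZl h (k : K) x y : corner_bilinear h -> in_corner x -> in_corner y ->
  h (k *: x) y = k *: h x y.
Proof.
move=> bh cx cy; have := bilinZl bh k x y.
by rewrite /= (corner_projE (in_cornerZ k cx)) !corner_projE.
Qed.
Lemma corner_bilinearNl h x y : corner_bilinear h -> in_corner x -> in_corner y ->
  h (- x) y = - h x y.
Proof. by move=> bh cx cy; rewrite -[- x]scaleN1r (corner_bilinearZl (-1) bh cx cy) scaleN1r. Qed.

Lemma teval2_corner t h : corner_tensor t ->
  teval2 t h = teval2 t (fun x y => h (corner_proj x) (corner_proj y)).
Proof. by move=> ct; apply: eq_in_teval2 => p /ct[c1 c2]; rewrite !corner_projE. Qed.

Lemma teq2_teval_corner t s h : teq2 t s -> corner_tensor t -> corner_tensor s ->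
  corner_bilinear h -> teval2 t h = teval2 s h.
Proof. by move=> ts ct cs bh; rewrite (teval2_corner _ ct) (teval2_corner _ cs) (teq2_teval ts). Qed.

Lemma tzero2_teval_corner t h : tzero2 t -> corner_tensor t -> corner_bilinear h ->
  teval2 t h = 0.
Proof. by move=> t0 ct bh; rewrite (teval2_corner _ ct) (tzero2_teval t0). Qed.

Lemma teval2_tscale2_corner (k : K) t h : corner_tensor t -> corner_bilinear h ->
  teval2 (tscale2 k t) h = k *: teval2 t h.
Proof.
move=> ct bh; rewrite /teval2 big_map scaler_sumr !big_seq; apply: eq_bigr => p /ct[c1 c2].
exact: corner_bilinearZl.
Qed.

Lemma teval2_tneg2_corner t h : corner_tensor t -> corner_bilinear h ->
  teval2 (tneg2 t) h = - teval2 t h.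
Proof.
move=> ct bh; rewrite /teval2 big_map -sumrN !big_seq; apply: eq_bigr => p /ct[c1 c2].
exact: corner_bilinearNl.
Qed.

End CornerBilinear.

Section CornerBracket.
Variables (inB : R -> Prop) (Q : R -> R -> tens2 R).
Hypothesis hQ : double_bracket in_corner inB Q.
Variable U : lmodType K.
Implicit Type h : R -> R -> U.

Lemma corner_bracket x y : in_corner x -> in_corner y -> corner_tensor (Q x y).
Proof. by case: hQ => [[cQ _ _ _ _] _] cx cy p; apply: cQ. Qed.

Lemma corner_bilinear_mulr h z : corner_bilinear h -> in_corner z ->
  corner_bilinear (fun u v => h u (v * z)).
Proof.
by move=> bh cz; apply: corner_bilinear_comp (linear_mulr z) _ _ => // x cx; apply: in_cornerM.
Qed.
Lemma corner_bilinear_mull h z : corner_bilinear h -> in_corner z ->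
  corner_bilinear (fun u v => h (z * u) v).
Proof.
by move=> bh cz; apply: corner_bilinear_comp (linear_mull z) _ _ _ => // x cx; apply: in_cornerM.
Qed.

Lemma teval_bracketZDr a (k : K) x y h : in_corner a -> in_corner x -> in_corner y ->
  corner_bilinear h -> teval2 (Q a (k *: x + y)) h = k *: teval2 (Q a x) h + teval2 (Q a y) h.
Proof.
case: hQ => [[_ _ QZDr _ _] _] ca cx cy bh.
rewrite (teq2_teval_corner (QZDr k a x y ca cx cy)) ?teval2_cat ?teval2_tscale2_corner //.
- exact: corner_bracket.
- by apply: corner_bracket => //; apply: in_cornerZD.
- by apply: corner_tensor_cat; [apply: corner_tensor_tscale2|]; apply: corner_bracket.
Qed.

Lemma teval_bracketZDl a (k : K) x y h : in_corner a -> in_corner x -> in_corner y ->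
  corner_bilinear h -> teval2 (Q (k *: x + y) a) h = k *: teval2 (Q x a) h + teval2 (Q y a) h.
Proof.
case: hQ => [[_ QZDl _ _ _] _] ca cx cy bh.
rewrite (teq2_teval_corner (QZDl k x y a cx cy ca)) ?teval2_cat ?teval2_tscale2_corner //.
- exact: corner_bracket.
- by apply: corner_bracket => //; apply: in_cornerZD.
- by apply: corner_tensor_cat; [apply: corner_tensor_tscale2|]; apply: corner_bracket.
Qed.

Lemma teval_bracket_base x y h : in_corner x -> in_corner y -> inB x \/ inB y ->
  corner_bilinear h -> teval2 (Q x y) h = 0.
Proof.
case: hQ => [[_ _ _ Qbase _] _] cx cy Bxy bh.
by apply: tzero2_teval_corner => //; [apply: Qbase | apply: corner_bracket].
Qed.

Lemma teval_bracket_skew x y h : in_corner x -> in_corner y -> corner_bilinear h ->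
  teval2 (Q x y) h = - teval2 (Q y x) (fun u v => h v u).
Proof.
case: hQ => [[_ _ _ _ Qskew] _] cx cy bh.
rewrite (teq2_teval_corner (Qskew x y cx cy)) ?teval2_tneg2_corner ?teval2_tflip //.
- by apply: corner_tensor_tflip; apply: corner_bracket.
- exact: corner_bracket.
- by apply: corner_tensor_tneg2; apply: corner_tensor_tflip; apply: corner_bracket.
Qed.

Lemma teval_bracketMr x y z h : in_corner x -> in_corner y -> in_corner z ->
  corner_bilinear h ->
  teval2 (Q x (y * z)) h =
    teval2 (Q x y) (fun u v => h u (v * z)) + teval2 (Q x z) (fun u v => h (y * u) v).
Proof.
case: hQ => [_ QMr] cx cy cz bh.
rewrite (teq2_teval_corner (QMr x y z cx cy cz)) ?teval2_cat;
  first by rewrite teval2_trmul teval2_tlmul.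
- by apply: corner_bracket => //; apply: in_cornerM.
- by apply: corner_tensor_cat; [apply: corner_tensor_trmul | apply: corner_tensor_tlmul];
    try apply: corner_bracket.
- done.
Qed.

Lemma teval_bracketMl x y z h : in_corner x -> in_corner y -> in_corner z ->
  corner_bilinear h ->
  teval2 (Q (x * y) z) h =
    teval2 (Q x z) (fun u v => h (u * y) v) + teval2 (Q y z) (fun u v => h u (x * v)).
Proof.
move=> cx cy cz bh; have cxy := in_cornerM cx cy.
rewrite teval_bracket_skew // teval_bracketMr //; last exact: corner_bilinear_flip.
rewrite opprD (teval_bracket_skew cx) ?(teval_bracket_skew cy) ?opprK //.
- apply: (@corner_bilinear_comp _ h id (fun v => x * v)) => //; first exact: linear_mull.
  by move=> v cv; apply: in_cornerM.
- apply: (@corner_bilinear_comp _ h (fun u => u * y) id) => //; first exact: linear_mulr.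
  by move=> u cu; apply: in_cornerM.
Qed.

End CornerBracket.

Section CornerDerivation.
Variables (inB : R -> Prop) (d : R -> tens2 R).
Hypothesis hd : double_derivation in_corner inB d.
Variable U : lmodType K.
Implicit Type h : R -> R -> U.

Lemma corner_deriv x : in_corner x -> corner_tensor (d x).
Proof. by case: hd => cd _ _ _ cx p; apply: cd. Qed.

Lemma teval_derivZD (k : K) x y h : in_corner x -> in_corner y -> bilinear_map h ->
  teval2 (d (k *: x + y)) h = k *: teval2 (d x) h + teval2 (d y) h.
Proof.
by case: hd => _ dZD _ _ cx cy bh; rewrite (teq2_teval (dZD k x y cx cy)) // teval2_cat teval2_tscale2.
Qed.

Lemma teval_derivM x y h : in_corner x -> in_corner y -> bilinear_map h ->
  teval2 (d (x * y)) h = teval2 (d x) (fun u v => h u (v * y)) + teval2 (d y) (fun u v => h (x * u) v).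
Proof.
case: hd => _ _ _ dM cx cy bh.
by rewrite (teq2_teval (dM x y cx cy)) // teval2_cat teval2_trmul teval2_tlmul.
Qed.

Lemma teval_deriv_base x h : in_corner x -> inB x -> bilinear_map h -> teval2 (d x) h = 0.
Proof. by case: hd => _ _ dbase _ cx Bx bh; apply: tzero2_teval => //; apply: dbase. Qed.

End CornerDerivation.

End Corner.

Section TripleBracket.
Variables (K : fieldType) (R : algType K) (U : lmodType K).
Implicit Types (f : R -> R -> R -> U) (Q : R -> R -> tens2 R) (t : tens2 R).

Definition cycle3 f : R -> R -> R -> U := fun x y z => f z x y.
Definition postmul3 (d : R) f : R -> R -> R -> U := fun x y z => f x y (z * d).
Definition premul1 (c : R) f : R -> R -> R -> U := fun x y z => f (c * x) y z.

Lemma trilinear_postmul3 d f : trilinear_map f -> trilinear_map (postmul3 d f).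
Proof.
by case=> H1 [H2 H3]; split; [|split] => * /=; rewrite /postmul3 ?mulrDl -?scalerAl;
  [apply: H1 | apply: H2 | apply: H3].
Qed.
Lemma trilinear_premul1 c f : trilinear_map f -> trilinear_map (premul1 c f).
Proof.
by case=> H1 [H2 H3]; split; [|split] => * /=; rewrite /premul1 ?mulrDr -?scalerAr;
  [apply: H1 | apply: H2 | apply: H3].
Qed.

Definition sweedler_eval Q a t f : U :=
  teval2 t (fun x z => teval2 (Q a x) (fun u v => f u v z)).
Definition triple_eval Q a b c f : U :=
  sweedler_eval Q a (Q b c) f + sweedler_eval Q b (Q c a) (cycle3 f)
  + sweedler_eval Q c (Q a b) (cycle3 (cycle3 f)).

Lemma teval3_triple_bracket Q a b c f :
  teval3 (triple_bracket Q a b c) f = triple_eval Q a b c f.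
Proof.
have tau3E (s : tens3 R) g : teval3 (tau3 s) g = teval3 s (cycle3 g) by rewrite /teval3 big_map.
have sweedlerE x s g : teval3 (sweedler Q x s) g = sweedler_eval Q x s g.
  by rewrite /teval3 /sweedler big_flatten /= big_map; apply: eq_bigr => p _; rewrite big_map.
by rewrite /triple_bracket !teval3_cat !tau3E !sweedlerE addrA.
Qed.

Lemma triple_eval_cycle Q a b c f : triple_eval Q a b c f = triple_eval Q c a b (cycle3 (cycle3 f)).
Proof. by rewrite /triple_eval addrC addrA. Qed.

Lemma sweedler_eval_add Q1 Q2 a t s f :
  sweedler_eval (bracket_add Q1 Q2) a (t ++ s) f =
  sweedler_eval Q1 a t f + sweedler_eval Q2 a t f + sweedler_eval Q1 a s f + sweedler_eval Q2 a s f.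
Proof.
have splitQ r : teval2 r (fun x z => teval2 (bracket_add Q1 Q2 a x) (fun u v => f u v z)) =
    sweedler_eval Q1 a r f + sweedler_eval Q2 a r f.
  by rewrite -teval2D; apply: eq_teval2 => x z; rewrite teval2_cat.
by rewrite /sweedler_eval teval2_cat !splitQ addrA.
Qed.

Variables (eps : R) (inB : R -> Prop) (Q : R -> R -> tens2 R).
Hypothesis eps_idem : eps * eps = eps.
Hypothesis hQ : double_bracket (in_corner eps) inB Q.
Local Notation in_corner := (in_corner eps).

Lemma corner_bilinear_sweedler a f : in_corner a -> trilinear_map f ->
  corner_bilinear eps (fun x z => teval2 (Q a x) (fun u v => f u v z)).
Proof.
move=> ca tf; split=> k x x' z /=.
  rewrite linear_corner_proj (teval_bracketZDr hQ) //; try exact: in_corner_proj.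
  exact: (bilinear_corner eps (trilinear_bil12 tf _)).
rewrite linear_corner_proj -teval2Z -teval2D; apply: eq_teval2 => u v.
by case: tf => _ [_ H3]; apply: H3.
Qed.

(* The cross terms produced by the Leibniz rule in the first and second
   summands cancel by skew-symmetry. *)
Lemma triple_evalMr a b c d f : in_corner a -> in_corner b -> in_corner c -> in_corner d ->
  trilinear_map f ->
  triple_eval Q a b (c * d) f = triple_eval Q a b c (postmul3 d f) + triple_eval Q a b d (premul1 c f).
Proof.
move=> ca cb cc cd tf; have ccd := in_cornerM eps_idem cc cd.
have bil12 g y : trilinear_map g -> corner_bilinear eps (fun u v => g u v y).
  by move=> tg; apply: bilinear_corner; apply: trilinear_bil12.
rewrite /triple_eval.
have -> : sweedler_eval Q a (Q b (c * d)) f =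
    sweedler_eval Q a (Q b c) (postmul3 d f) + sweedler_eval Q a (Q b d) (premul1 c f) +
    teval2 (Q b d) (fun x z => teval2 (Q a c) (fun u v => f u (v * x) z)).
  rewrite /sweedler_eval (teval_bracketMr eps_idem hQ) //; last exact: corner_bilinear_sweedler.
  rewrite -addrA -teval2D; congr (_ + _); apply: eq_in_teval2 => p /(corner_bracket hQ cb cd) [c1 _].
  rewrite (teval_bracketMr eps_idem hQ) //; last exact: bil12.
  by rewrite addrC.
have -> : sweedler_eval Q b (Q (c * d) a) (cycle3 f) =
    sweedler_eval Q b (Q c a) (cycle3 (postmul3 d f)) +
    sweedler_eval Q b (Q d a) (cycle3 (premul1 c f)) +
    teval2 (Q c a) (fun x z => teval2 (Q b d) (fun u v => f z (x * u) v)).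
  rewrite /sweedler_eval (teval_bracketMl eps_idem hQ) //.
    2: by apply: corner_bilinear_sweedler => //; apply: trilinear_rot.
  rewrite addrAC -teval2D; congr (_ + _); apply: eq_in_teval2 => p /(corner_bracket hQ cc ca) [c1 _].
  by rewrite (teval_bracketMr eps_idem hQ) //; apply: bil12; apply: trilinear_rot.
have -> : sweedler_eval Q (c * d) (Q a b) (cycle3 (cycle3 f)) =
    sweedler_eval Q c (Q a b) (cycle3 (cycle3 (postmul3 d f))) +
    sweedler_eval Q d (Q a b) (cycle3 (cycle3 (premul1 c f))).
  rewrite /sweedler_eval -teval2D; apply: eq_in_teval2 => p /(corner_bracket hQ ca cb) [c1 _].
  by rewrite (teval_bracketMl eps_idem hQ) //; apply: bil12; do 2 apply: trilinear_rot.
have -> : teval2 (Q c a) (fun x z => teval2 (Q b d) (fun u v => f z (x * u) v)) =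
    - teval2 (Q b d) (fun x z => teval2 (Q a c) (fun u v => f u (v * x) z)).
  rewrite (teval_bracket_skew hQ) //; last first.
    apply: bilinear_corner; apply: bilinear_teval2 => u v; case: tf => H1 [H2 _].
    by split=> *; [rewrite mulrDl -scalerAl H2 | apply: H1].
  by rewrite teval2_exchange.
set X := teval2 (Q b d) _.
set A1 := sweedler_eval Q a (Q b c) _; set A2 := sweedler_eval Q a (Q b d) _.
set B1 := sweedler_eval Q b (Q c a) _; set B2 := sweedler_eval Q b (Q d a) _.
set C1 := sweedler_eval Q c (Q a b) _; set C2 := sweedler_eval Q d (Q a b) _.
lincomb [:: A1; A2; B1; B2; C1; C2; X].
Qed.

Lemma triple_evalZDr a b c c' (k : K) f : in_corner a -> in_corner b -> in_corner c -> in_corner c' ->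
  trilinear_map f ->
  triple_eval Q a b (k *: c + c') f = k *: triple_eval Q a b c f + triple_eval Q a b c' f.
Proof.
move=> ca cb cc cc' tf; rewrite /triple_eval /sweedler_eval.
rewrite (teval_bracketZDr hQ) //; last exact: corner_bilinear_sweedler.
rewrite (teval_bracketZDl hQ) //; last by apply: corner_bilinear_sweedler => //; apply: trilinear_rot.
have -> : teval2 (Q a b) (fun x z => teval2 (Q (k *: c + c') x) (fun u v => cycle3 (cycle3 f) u v z)) =
    k *: teval2 (Q a b) (fun x z => teval2 (Q c x) (fun u v => cycle3 (cycle3 f) u v z)) +
    teval2 (Q a b) (fun x z => teval2 (Q c' x) (fun u v => cycle3 (cycle3 f) u v z)).
  rewrite -teval2Z -teval2D; apply: eq_in_teval2 => p /(corner_bracket hQ ca cb) [c1 _].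
  rewrite (teval_bracketZDl hQ) //; apply: bilinear_corner.
  exact: (trilinear_bil12 (trilinear_rot (trilinear_rot tf))).
set A1 := teval2 (Q b c) _; set A2 := teval2 (Q b c') _.
set B1 := teval2 (Q c a) _; set B2 := teval2 (Q c' a) _.
set C1 := teval2 (Q a b) (fun x z => teval2 (Q c x) _).
set C2 := teval2 (Q a b) (fun x z => teval2 (Q c' x) _).
lincomb [:: A1; A2; B1; B2; C1; C2].
Qed.

End TripleBracket.

Section MixedProduct.
Variables (K : fieldType) (R : algType K) (eps : R) (inB : R -> Prop).
Hypothesis eps_idem : eps * eps = eps.
Local Notation in_corner := (in_corner eps).

Definition mixed_prod (s t : tens2 R) : tens2 R := [seq (q.1 * p.2, p.1 * q.2) | p <- s, q <- t].

Section Evaluation.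
Variable U : lmodType K.
Implicit Type h : R -> R -> U.

Lemma teval2_mixed_prod s t h :
  teval2 (mixed_prod s t) h = teval2 s (fun p1 p2 => teval2 t (fun q1 q2 => h (q1 * p2) (p1 * q2))).
Proof. by rewrite /teval2 big_allpairs_dep. Qed.

Lemma bilinear_mixed_inner h p1 p2 : bilinear_map h ->
  bilinear_map (fun q1 q2 => h (q1 * p2) (p1 * q2)).
Proof. by move=> bh; apply: bilinear_comp bh (linear_mulr p2) (linear_mull p1). Qed.

Lemma bilinear_mixed_outer t h : bilinear_map h ->
  bilinear_map (fun p1 p2 => teval2 t (fun q1 q2 => h (q1 * p2) (p1 * q2))).
Proof.
move=> bh; apply: (@bilinear_teval2 _ _ _ t (fun p1 p2 q1 q2 => h (q1 * p2) (p1 * q2))) => u v.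
exact: bilinear_comp (bilinear_flip bh) (linear_mulr v) (linear_mull u).
Qed.

Lemma teval2_mixed_prod_flip s t h :
  teval2 (mixed_prod s t) (fun u v => h v u) = teval2 (mixed_prod t s) h.
Proof. by rewrite !teval2_mixed_prod teval2_exchange. Qed.

Lemma corner_tensor_mixed_prod s t :
  corner_tensor eps s -> corner_tensor eps t -> corner_tensor eps (mixed_prod s t).
Proof.
move=> cs ct x /allpairsP[[p q] [/cs[c1 c2] /ct[c3 c4] ->]].
by split; apply: in_cornerM.
Qed.

Lemma corner_bilinear_mixed_inner h p1 p2 : corner_bilinear eps h ->
  in_corner p1 -> in_corner p2 -> corner_bilinear eps (fun q1 q2 => h (q1 * p2) (p1 * q2)).
Proof.
move=> bh c1 c2; apply: corner_bilinear_comp (linear_mulr p2) (linear_mull p1) _ _ => //;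
  by move=> x cx; apply: in_cornerM.
Qed.

Lemma corner_bilinear_mixed_outer h a b : corner_bilinear eps h ->
  in_corner a -> in_corner b -> corner_bilinear eps (fun p1 p2 => h (a * p2) (p1 * b)).
Proof.
move=> bh ca cb; apply: (@corner_bilinear_comp _ _ eps eps_idem _ (fun u v => h v u)).
- exact: corner_bilinear_flip.
- exact: linear_mulr.
- exact: linear_mull.
- by move=> x cx; apply: in_cornerM.
- by move=> x cx; apply: in_cornerM.
Qed.

End Evaluation.

Variables (d1 d2 : R -> tens2 R).
Hypotheses (hd1 : double_derivation in_corner inB d1) (hd2 : double_derivation in_corner inB d2).
Variable U : lmodType K.
Implicit Type h : R -> R -> U.

Local Notation M x y h := (teval2 (mixed_prod (d1 x) (d2 y)) h).

Lemma teval_mixed_derivZDl (k : K) x x' y h : in_corner x -> in_corner x' -> bilinear_map h ->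
  M (k *: x + x') y h = k *: M x y h + M x' y h.
Proof.
by move=> cx cx' bh; rewrite !teval2_mixed_prod (teval_derivZD hd1) //; apply: bilinear_mixed_outer.
Qed.

Lemma teval_mixed_derivZDr (k : K) x y y' h : in_corner y -> in_corner y' -> bilinear_map h ->
  M x (k *: y + y') h = k *: M x y h + M x y' h.
Proof.
move=> cy cy' bh; rewrite !teval2_mixed_prod -teval2Z -teval2D; apply: eq_teval2 => p1 p2.
by rewrite (teval_derivZD hd2) //; apply: bilinear_mixed_inner.
Qed.

Lemma teval_mixed_derivMr x y z h : in_corner y -> in_corner z -> bilinear_map h ->
  M x (y * z) h = M x y (fun u v => h u (v * z)) + M x z (fun u v => h (y * u) v).
Proof.
move=> cy cz bh; rewrite !teval2_mixed_prod -teval2D; apply: eq_teval2 => p1 p2.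
rewrite (teval_derivM hd2) //; last exact: bilinear_mixed_inner.
by congr (_ + _); apply: eq_teval2 => q1 q2; rewrite !mulrA.
Qed.

Lemma teval_mixed_deriv_base x y h : in_corner x -> in_corner y -> inB x \/ inB y -> bilinear_map h ->
  M x y h = 0.
Proof.
move=> cx cy [Bx | By] bh; rewrite teval2_mixed_prod.
  by rewrite (teval_deriv_base hd1) //; apply: bilinear_mixed_outer.
rewrite -(teval2_0 U (d1 x)); apply: eq_teval2 => p1 p2.
by rewrite (teval_deriv_base hd2) //; apply: bilinear_mixed_inner.
Qed.

End MixedProduct.

Section FusionDoubleBracket.
Variables (K : fieldType) (R : algType K) (eps : R) (inB : R -> Prop).
Hypothesis eps_idem : eps * eps = eps.
Variables (E1 E2 : R -> tens2 R).
Hypotheses (hE1 : double_derivation (in_corner eps) inB E1)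
           (hE2 : double_derivation (in_corner eps) inB E2).
Local Notation in_corner := (in_corner eps).
Local Notation F := (fus_bracket E1 E2).
Variable U : lmodType K.
Implicit Type h : R -> R -> U.

Lemma teval2_fus x y h : bilinear_map h ->
  teval2 (F x y) h = - 2%:R^-1 *: teval2 (mixed_prod (E1 x) (E2 y)) h
                     + 2%:R^-1 *: teval2 (mixed_prod (E2 x) (E1 y)) h.
Proof. by move=> bh; rewrite /fus_bracket teval2_cat !teval2_tscale2. Qed.

Lemma corner_fus x y : in_corner x -> in_corner y -> corner_tensor eps (F x y).
Proof.
move=> cx cy; have [c1x c2x] := (corner_deriv hE1 cx, corner_deriv hE2 cx).
have [c1y c2y] := (corner_deriv hE1 cy, corner_deriv hE2 cy).
by apply: corner_tensor_cat; apply: corner_tensor_tscale2; apply: (corner_tensor_mixed_prod eps_idem).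
Qed.

Lemma teval2_fus_corner x y h : in_corner x -> in_corner y -> corner_bilinear eps h ->
  teval2 (F x y) h = - 2%:R^-1 *: teval2 (mixed_prod (E1 x) (E2 y)) h
                     + 2%:R^-1 *: teval2 (mixed_prod (E2 x) (E1 y)) h.
Proof.
move=> cx cy bh; have [c1x c2x] := (corner_deriv hE1 cx, corner_deriv hE2 cx).
have [c1y c2y] := (corner_deriv hE1 cy, corner_deriv hE2 cy).
by rewrite /fus_bracket teval2_cat !(@teval2_tscale2_corner _ _ eps) //;
  apply: (corner_tensor_mixed_prod eps_idem).
Qed.

End FusionDoubleBracket.

Lemma fus_double_bracket (K : fieldType) (R : algType K) (eps : R) (inB : R -> Prop)
    (E1 E2 : R -> tens2 R) : eps * eps = eps ->
  double_derivation (in_corner eps) inB E1 -> double_derivation (in_corner eps) inB E2 ->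
  double_bracket (in_corner eps) inB (fus_bracket E1 E2).
Proof.
move=> eps_idem hE1 hE2; split; first split.
- by move=> x y p cx cy; apply: (corner_fus eps_idem hE1 hE2 cx cy).
- move=> k x x' y cx cx' cy; apply: teval2_teq2 => U h bh.
  rewrite teval2_cat teval2_tscale2 // !teval2_fus //.
  rewrite (teval_mixed_derivZDl E2 hE1 k) ?(teval_mixed_derivZDl E1 hE2 k) //.
  set a1 := teval2 (mixed_prod (E1 x) _) h; set a2 := teval2 (mixed_prod (E1 x') _) h.
  set a3 := teval2 (mixed_prod (E2 x) _) h; set a4 := teval2 (mixed_prod (E2 x') _) h.
  lincomb [:: a1; a2; a3; a4].
- move=> k x y y' cx cy cy'; apply: teval2_teq2 => U h bh.
  rewrite teval2_cat teval2_tscale2 // !teval2_fus //.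
  rewrite (teval_mixed_derivZDr E1 hE2 k) ?(teval_mixed_derivZDr E2 hE1 k) //.
  set a1 := teval2 (mixed_prod _ (E2 y)) h; set a2 := teval2 (mixed_prod _ (E2 y')) h.
  set a3 := teval2 (mixed_prod _ (E1 y)) h; set a4 := teval2 (mixed_prod _ (E1 y')) h.
  lincomb [:: a1; a2; a3; a4].
- move=> x y cx cy Bxy U h bh; rewrite -/(teval2 _ h) teval2_fus //.
  by rewrite (teval_mixed_deriv_base hE1 hE2) ?(teval_mixed_deriv_base hE2 hE1) // !scaler0 addr0.
- move=> x y cx cy; apply: teval2_teq2 => U h bh.
  rewrite teval2_tneg2 // teval2_tflip !teval2_fus //; last exact: bilinear_flip.
  rewrite (teval2_mixed_prod_flip (E1 y) (E2 x) h) (teval2_mixed_prod_flip (E2 y) (E1 x) h).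
  set a1 := teval2 (mixed_prod (E1 x) _) h; set a2 := teval2 (mixed_prod (E2 x) _) h.
  lincomb [:: a1; a2].
- move=> x y z cx cy cz; apply: teval2_teq2 => U h bh.
  have id_lin : linear_map (@id R) by [].
  have bhr := bilinear_comp bh id_lin (linear_mulr z).
  have bhl := bilinear_comp bh (linear_mull y) id_lin.
  rewrite teval2_cat teval2_trmul teval2_tlmul !teval2_fus //.
  rewrite (teval_mixed_derivMr E1 hE2) ?(teval_mixed_derivMr E2 hE1) //.
  set a1 := teval2 (mixed_prod (E1 x) (E2 y)) _; set a2 := teval2 (mixed_prod (E1 x) (E2 z)) _.
  set a3 := teval2 (mixed_prod (E2 x) (E1 y)) _; set a4 := teval2 (mixed_prod (E2 x) (E1 z)) _.
  lincomb [:: a1; a2; a3; a4].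
Qed.

Lemma bracket_add_double_bracket (K : fieldType) (R : algType K) (D inB : R -> Prop)
    (Q1 Q2 : R -> R -> tens2 R) :
  double_bracket D inB Q1 -> double_bracket D inB Q2 -> double_bracket D inB (bracket_add Q1 Q2).
Proof.
move=> [[D1 ZDl1 ZDr1 base1 skew1] M1] [[D2 ZDl2 ZDr2 base2 skew2] M2].
rewrite /bracket_add; split; first split.
- by move=> x y p Dx Dy; rewrite mem_cat => /orP[/D1 | /D2]; apply.
- move=> k x x' y Dx Dx' Dy; apply: teval2_teq2 => U h bh.
  rewrite !teval2_cat teval2_tscale2 // teval2_cat (teq2_teval (ZDl1 k x x' y Dx Dx' Dy)) //.
  rewrite (teq2_teval (ZDl2 k x x' y Dx Dx' Dy)) // !teval2_cat !teval2_tscale2 //.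
  set a1 := teval2 (Q1 x y) h; set a2 := teval2 (Q1 x' y) h.
  set a3 := teval2 (Q2 x y) h; set a4 := teval2 (Q2 x' y) h.
  lincomb [:: a1; a2; a3; a4].
- move=> k x y y' Dx Dy Dy'; apply: teval2_teq2 => U h bh.
  rewrite !teval2_cat teval2_tscale2 // teval2_cat (teq2_teval (ZDr1 k x y y' Dx Dy Dy')) //.
  rewrite (teq2_teval (ZDr2 k x y y' Dx Dy Dy')) // !teval2_cat !teval2_tscale2 //.
  set a1 := teval2 (Q1 x y) h; set a2 := teval2 (Q1 x y') h.
  set a3 := teval2 (Q2 x y) h; set a4 := teval2 (Q2 x y') h.
  lincomb [:: a1; a2; a3; a4].
- move=> x y Dx Dy Bxy U h bh; rewrite -/(teval2 _ h) teval2_cat.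
  by rewrite (tzero2_teval (base1 x y Dx Dy Bxy)) ?(tzero2_teval (base2 x y Dx Dy Bxy)) ?addr0.
- move=> x y Dx Dy; apply: teval2_teq2 => U h bh.
  rewrite teval2_cat (teq2_teval (skew1 x y Dx Dy)) // (teq2_teval (skew2 x y Dx Dy)) //.
  by rewrite /tflip /tneg2 !map_cat teval2_cat.
- move=> x y z Dx Dy Dz; apply: teval2_teq2 => U h bh.
  rewrite teval2_cat (teq2_teval (M1 x y z Dx Dy Dz)) // (teq2_teval (M2 x y z Dx Dy Dz)) //.
  rewrite /trmul /tlmul !map_cat !teval2_cat.
  set a1 := teval2 [seq _ | _ <- Q1 x y] h; set a2 := teval2 [seq _ | _ <- Q1 x z] h.
  set a3 := teval2 [seq _ | _ <- Q2 x y] h; set a4 := teval2 [seq _ | _ <- Q2 x z] h.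
  lincomb [:: a1; a2; a3; a4].
Qed.

Section Kappa.
Variables (K : fieldType) (R : algType K) (U : lmodType K) (Q1 Q2 : R -> R -> tens2 R).
Implicit Type f : R -> R -> R -> U.
Local Notation kappa_eval a b c f := (teval3 (kappa Q1 Q2 a b c) f).

Lemma teval3_kappa a b c f : trilinear_map f ->
  kappa_eval a b c f =
  triple_eval (bracket_add Q1 Q2) a b c f - triple_eval Q1 a b c f - triple_eval Q2 a b c f.
Proof.
move=> tf; rewrite /kappa (teval3_cat (triple_bracket _ _ _ _)) (teval3_cat (tneg3 _)).
by rewrite !(teval3_tneg3 tf) !teval3_triple_bracket addrA.
Qed.

Lemma kappa_eval_cycle a b c f : trilinear_map f ->
  kappa_eval a b c f = kappa_eval c a b (cycle3 (cycle3 f)).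
Proof.
move=> tf; rewrite !teval3_kappa //; last by do 2 apply: trilinear_rot.
by rewrite [triple_eval _ a b c f]triple_eval_cycle [triple_eval Q1 a b c f]triple_eval_cycle
  [triple_eval Q2 a b c f]triple_eval_cycle.
Qed.

Lemma kappa_eval_cross a b c f : trilinear_map f ->
  kappa_eval a b c f =
    sweedler_eval Q1 a (Q2 b c) f + sweedler_eval Q2 a (Q1 b c) f
  + sweedler_eval Q1 b (Q2 c a) (cycle3 f) + sweedler_eval Q2 b (Q1 c a) (cycle3 f)
  + sweedler_eval Q1 c (Q2 a b) (cycle3 (cycle3 f))
  + sweedler_eval Q2 c (Q1 a b) (cycle3 (cycle3 f)).
Proof.
move=> tf; rewrite teval3_kappa // /triple_eval [bracket_add Q1 Q2 b c]/bracket_add.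
rewrite [bracket_add Q1 Q2 c a]/bracket_add [bracket_add Q1 Q2 a b]/bracket_add !sweedler_eval_add.
set A1 := sweedler_eval Q1 a (Q1 b c) f; set A2 := sweedler_eval Q2 a (Q1 b c) f.
set A3 := sweedler_eval Q1 a (Q2 b c) f; set A4 := sweedler_eval Q2 a (Q2 b c) f.
set B1 := sweedler_eval Q1 b (Q1 c a) _; set B2 := sweedler_eval Q2 b (Q1 c a) _.
set B3 := sweedler_eval Q1 b (Q2 c a) _; set B4 := sweedler_eval Q2 b (Q2 c a) _.
set C1 := sweedler_eval Q1 c (Q1 a b) _; set C2 := sweedler_eval Q2 c (Q1 a b) _.
set C3 := sweedler_eval Q1 c (Q2 a b) _; set C4 := sweedler_eval Q2 c (Q2 a b) _.
lincomb [:: A1; A2; A3; A4; B1; B2; B3; B4; C1; C2; C3; C4].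
Qed.

Variables (eps : R) (inB : R -> Prop).
Hypothesis eps_idem : eps * eps = eps.
Hypotheses (hQ1 : double_bracket (in_corner eps) inB Q1)
           (hQ2 : double_bracket (in_corner eps) inB Q2).
Local Notation in_corner := (in_corner eps).

Lemma kappa_evalMr a b c d f :
  in_corner a -> in_corner b -> in_corner c -> in_corner d -> trilinear_map f ->
  kappa_eval a b (c * d) f = kappa_eval a b c (postmul3 d f) + kappa_eval a b d (premul1 c f).
Proof.
move=> ca cb cc cd tf; have hQ := bracket_add_double_bracket hQ1 hQ2.
have tfd := trilinear_postmul3 d tf; have tfc := trilinear_premul1 c tf.
rewrite !teval3_kappa // !(triple_evalMr eps_idem hQ, triple_evalMr eps_idem hQ1,
  triple_evalMr eps_idem hQ2) //.
set A1 := triple_eval (bracket_add Q1 Q2) a b c _; set A2 := triple_eval (bracket_add Q1 Q2) a b d _.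
set A3 := triple_eval Q1 a b c _; set A4 := triple_eval Q1 a b d _.
set A5 := triple_eval Q2 a b c _; set A6 := triple_eval Q2 a b d _.
lincomb [:: A1; A2; A3; A4; A5; A6].
Qed.

Lemma kappa_evalZDr a b c c' (k : K) f :
  in_corner a -> in_corner b -> in_corner c -> in_corner c' -> trilinear_map f ->
  kappa_eval a b (k *: c + c') f = k *: kappa_eval a b c f + kappa_eval a b c' f.
Proof.
move=> ca cb cc cc' tf; have hQ := bracket_add_double_bracket hQ1 hQ2.
rewrite !teval3_kappa // !(triple_evalZDr eps_idem hQ, triple_evalZDr eps_idem hQ1,
  triple_evalZDr eps_idem hQ2) //.
set A1 := triple_eval (bracket_add Q1 Q2) a b c f; set A2 := triple_eval (bracket_add Q1 Q2) a b c' f.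
set A3 := triple_eval Q1 a b c f; set A4 := triple_eval Q1 a b c' f.
set A5 := triple_eval Q2 a b c f; set A6 := triple_eval Q2 a b c' f.
lincomb [:: A1; A2; A3; A4; A5; A6].
Qed.

End Kappa.

Section Closure.
Variables (K : fieldType) (R : algType K) (G : R -> Prop).

Inductive alg_closure : R -> Prop :=
| alg_closure_gen x : G x -> alg_closure x
| alg_closureZD (k : K) x y : alg_closure x -> alg_closure y -> alg_closure (k *: x + y)
| alg_closureM x y : alg_closure x -> alg_closure y -> alg_closure (x * y).

Lemma alg_closureD x y : alg_closure x -> alg_closure y -> alg_closure (x + y).
Proof. by move=> Gx Gy; have := alg_closureZD 1 Gx Gy; rewrite scale1r. Qed.

Variables (eps : R) (inB : R -> Prop) (Q1 Q2 : R -> R -> tens2 R).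
Hypothesis eps_idem : eps * eps = eps.
Hypotheses (hQ1 : double_bracket (in_corner eps) inB Q1)
           (hQ2 : double_bracket (in_corner eps) inB Q2).
Hypothesis G_corner : forall x, G x -> in_corner eps x.

Lemma alg_closure_corner x : alg_closure x -> in_corner eps x.
Proof.
elim=> [y /G_corner // | k y z _ cy _ cz | y z _ cy _ cz];
  [exact: in_cornerZD | exact: in_cornerM].
Qed.

Lemma tzero3_kappa_cycle a b c :
  tzero3 (kappa Q1 Q2 c a b) -> tzero3 (kappa Q1 Q2 a b c).
Proof.
move=> k0 U f tf; rewrite -/(teval3 _ f) kappa_eval_cycle //.
by apply: k0; do 2 apply: trilinear_rot.
Qed.

Lemma tzero3_kappa_closure_last a b : in_corner eps a -> in_corner eps b ->
  (forall g, G g -> tzero3 (kappa Q1 Q2 a b g)) ->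
  forall c, alg_closure c -> tzero3 (kappa Q1 Q2 a b c).
Proof.
move=> ca cb kG c; elim=> [g /kG // | k x y Gx kx Gy ky | x y Gx kx Gy ky] U f tf;
  have [cx cy] := (alg_closure_corner Gx, alg_closure_corner Gy); rewrite -/(teval3 _ f).
- by rewrite (kappa_evalZDr eps_idem hQ1 hQ2) // [teval3 _ f]kx // [teval3 _ f]ky // scaler0 addr0.
- rewrite (kappa_evalMr eps_idem hQ1 hQ2) // [teval3 _ (postmul3 _ _)]kx ?[teval3 _ _]ky ?addr0 //.
  + exact: trilinear_premul1.
  + exact: trilinear_postmul3.
Qed.

Lemma tzero3_kappa_closure :
  (forall a b c, G a -> G b -> G c -> tzero3 (kappa Q1 Q2 a b c)) ->
  forall a b c, alg_closure a -> alg_closure b -> alg_closure c -> tzero3 (kappa Q1 Q2 a b c).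
Proof.
move=> kG.
have k1 a b c : G a -> G b -> alg_closure c -> tzero3 (kappa Q1 Q2 a b c).
  move=> Ga Gb; apply: tzero3_kappa_closure_last;
    [exact: G_corner | exact: G_corner | by move=> g; apply: kG].
have k2 a b c : G a -> alg_closure b -> alg_closure c -> tzero3 (kappa Q1 Q2 a b c).
  move=> Ga Cb; apply: tzero3_kappa_closure_last;
    [exact: G_corner | exact: alg_closure_corner | move=> g Gg; apply: tzero3_kappa_cycle; exact: k1].
move=> a b c Ca Cb; apply: tzero3_kappa_closure_last; try exact: alg_closure_corner.
by move=> g Gg; apply: tzero3_kappa_cycle; apply: k2.
Qed.

End Closure.

Lemma mulr_insert_one (R : pzRingType) (E a b l r u v : R) : E * E + a * b = 1 ->
  l * (u * v) * r = l * u * E * (E * v * r) + l * u * a * (b * v * r).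
Proof. by move=> one; rewrite -{1}[u]mulr1 -one !(mulrDr, mulrDl) !mulrA. Qed.

Local Arguments epsf : simpl never.

Section FusionAlgebra.
Variables (K : fieldType) (A : algType K) (N : nat) (e : nat -> A).
Hypothesis hN : (2 <= N)%N.
Hypothesis he : idempotent_system N e.
Variables (Abar : algType K) (iota : A -> Abar) (g12 g21 : Abar).
Hypothesis hfus : is_fusion_product (e 1%N) (e 2%N) iota g12 g21.

Local Notation eps := (epsf e iota).
Local Notation f1 := (iota (e 1%N)).
Local Notation f2 := (iota (e 2%N)).
Local Notation ep := (eplus e iota g12).
Local Notation em := (eminus e iota g21).
Local Notation gen := (gen e iota g12 g21).

Lemma e_mul s t : (1 <= s <= N)%N -> (1 <= t <= N)%N -> e s * e t = if s == t then e s else 0.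
Proof. by case: he => _ + _; apply. Qed.
Lemma e1_idem : e 1 * e 1 = e 1.
Proof. by rewrite e_mul //; apply/andP; split => //; apply: leq_trans hN. Qed.
Lemma e2_idem : e 2 * e 2 = e 2.
Proof. by rewrite e_mul //; apply/andP; split. Qed.
Lemma e1e2 : e 1 * e 2 = 0.
Proof. by rewrite e_mul //; apply/andP; split => //; apply: leq_trans hN. Qed.
Lemma e2e1 : e 2 * e 1 = 0.
Proof. by rewrite e_mul //; apply/andP; split => //; apply: leq_trans hN. Qed.

Lemma iota_hom : alg_hom iota.
Proof. by case: hfus. Qed.

Lemma f1_idem : f1 * f1 = f1.
Proof. by rewrite -(alg_homM iota_hom) e1_idem. Qed.

Section MatrixUnits.
Let mu := let: And3 _ mu _ := hfus in mu.
Let o0 : 'I_2 := Ordinal (isT : 0 < 2)%N.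
Let o1 : 'I_2 := Ordinal (isT : 1 < 2)%N.

Lemma f1g12 : f1 * g12 = g12. Proof. exact: (mu o0 o0 o0 o1). Qed.
Lemma g12f2 : g12 * f2 = g12. Proof. exact: (mu o0 o1 o1 o1). Qed.
Lemma g12g21 : g12 * g21 = f1. Proof. exact: (mu o0 o1 o1 o0). Qed.
Lemma g21g12 : g21 * g12 = f2. Proof. exact: (mu o1 o0 o0 o1). Qed.
Lemma g21f1 : g21 * f1 = g21. Proof. exact: (mu o1 o0 o0 o0). Qed.
Lemma f2g21 : f2 * g21 = g21. Proof. exact: (mu o1 o1 o1 o0). Qed.
Lemma f2g12 : f2 * g12 = 0. Proof. exact: (mu o1 o1 o0 o1). Qed.
Lemma f1g21 : f1 * g21 = 0. Proof. exact: (mu o0 o0 o1 o0). Qed.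
Lemma g21f2 : g21 * f2 = 0. Proof. exact: (mu o1 o0 o1 o1). Qed.
Lemma g12g12 : g12 * g12 = 0. Proof. exact: (mu o0 o1 o0 o1). Qed.

End MatrixUnits.

Lemma epsE : eps = iota (1 - e 2).
Proof. by rewrite (alg_homB iota_hom) (alg_hom1 iota_hom). Qed.
Lemma eps_idem : eps * eps = eps.
Proof. by rewrite epsE -(alg_homM iota_hom) mulrBr mulr1 mulrBl mul1r e2_idem subrr subr0. Qed.
Lemma eps_g12 : eps * g12 = g12. Proof. by rewrite /epsf mulrBl mul1r f2g12 subr0. Qed.
Lemma g12_eps : g12 * eps = 0. Proof. by rewrite /epsf mulrBr mulr1 g12f2 subrr. Qed.
Lemma eps_g21 : eps * g21 = 0. Proof. by rewrite /epsf mulrBl mul1r f2g21 subrr. Qed.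
Lemma g21_eps : g21 * eps = g21. Proof. by rewrite /epsf mulrBr mulr1 g21f2 subr0. Qed.
Lemma eps_f1 : eps * f1 = f1.
Proof. by rewrite epsE -(alg_homM iota_hom) mulrBl mul1r e2e1 subr0. Qed.
Lemma f1_eps : f1 * eps = f1.
Proof. by rewrite epsE -(alg_homM iota_hom) mulrBr mulr1 e1e2 subr0. Qed.

Local Notation in_corner := (in_corner eps).

Lemma in_corner_f1 : in_corner f1.
Proof. by rewrite /in_corner eps_f1 f1_eps. Qed.

Lemma inBf_f1 : inBf N e iota f1.
Proof.
exists (fun s => (s == 1%N)%:R); rewrite /= scale1r big1_seq ?addr0 // => s.
by rewrite mem_index_iota => /andP[_ /andP[+ _]]; case: eqP => [-> // | _ _]; rewrite scale0r.
Qed.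

Lemma eps_eplus sp : eps * ep sp = ep sp.
Proof. by case: sp; rewrite /= ?eps_g12 ?eps_idem. Qed.
Lemma eminus_eps sm : em sm * eps = em sm.
Proof. by case: sm; rewrite /= ?g21_eps ?eps_idem. Qed.

Lemma in_corner_gen sp sm x : in_corner (gen sp sm x).
Proof. by rewrite /in_corner /gen !mulrA eps_eplus -!mulrA eminus_eps. Qed.
Lemma gen_f1 sp x : gen sp true x * f1 = gen sp true x.
Proof. by rewrite /gen /= -mulrA g21f1. Qed.
Lemma f1_gen sm x : f1 * gen true sm x = gen true sm x.
Proof. by rewrite /gen /= !mulrA f1g12. Qed.

Lemma gen_normal sp sm x : ep sp * iota x * em sm = gen sp sm (idemL e sp * x * idemR e sm).
Proof.
have idemL_eplus : ep sp = ep sp * iota (idemL e sp).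
  by case: sp; rewrite /= ?g12f2 // -epsE eps_idem.
have eminus_idemR : em sm = iota (idemR e sm) * em sm.
  by case: sm; rewrite /= ?f2g21 // -epsE eps_idem.
by rewrite /gen !(alg_homM iota_hom) {1}idemL_eplus {1}eminus_idemR !mulrA.
Qed.

Lemma corner_normal sp sm x : corner e sp sm (idemL e sp * x * idemR e sm).
Proof.
have idem2 (b : bool) : (if b then e 2 else 1 - e 2) * (if b then e 2 else 1 - e 2) =
    (if b then e 2 else 1 - e 2).
  by case: b; rewrite ?e2_idem // mulrBr mulr1 mulrBl mul1r e2_idem subrr subr0.
by rewrite /corner !mulrA idem2 -!mulrA idem2.
Qed.

Definition fusion_gen (x : Abar) : Prop :=
  exists sp sm alpha, corner e sp sm alpha /\ x = gen sp sm alpha.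

Local Notation closure := (alg_closure fusion_gen).

Lemma closure_normal sp sm a : closure (ep sp * iota a * em sm).
Proof.
by rewrite gen_normal; apply: alg_closure_gen; do 3 eexists; split; first exact: corner_normal.
Qed.

Lemma closure0 : closure 0.
Proof. by have := closure_normal false false 0; rewrite (alg_hom0 iota_hom) mulr0 mul0r. Qed.
Lemma closure_f1 : closure f1.
Proof. by have := closure_normal false false (e 1); rewrite /= in_corner_f1. Qed.

(* Inserting [1 = eps * eps + g21 * g12] between [u] and [v]. *)
Lemma corner_splitM sp sm u v :
  ep sp * (u * v) * em sm =
  ep sp * u * em false * (ep false * v * em sm) + ep sp * u * em true * (ep true * v * em sm).
Proof.
have one : eps * eps + g21 * g12 = 1 by rewrite eps_idem g21g12 /epsf subrK.
exact: mulr_insert_one.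
Qed.

(* By induction over [Abar], the four corners [e_+ u e_-] of any [u] lie in the
   closure; for [u] in [A^f] the corner [eps u eps] is [u] itself. *)
Lemma closure_corner u : in_corner u -> closure u.
Proof.
move=> cu; suff : forall sp sm, closure (ep sp * u * em sm) by move/(_ false false); rewrite /= cu.
apply: (fusion_product_ind hfus (G := fun u => forall sp sm, closure (ep sp * u * em sm))) => //.
- split=> [sp sm | k x y Cx Cy sp sm | x y Cx Cy sp sm].
  + by rewrite -(alg_hom1 iota_hom); apply: closure_normal.
  + by rewrite mulrDr mulrDl -scalerAr -scalerAl; apply: alg_closureZD.
  + by rewrite corner_splitM; apply: alg_closureD; apply: alg_closureM.
- by move=> a sp sm; apply: closure_normal.
- by case=> -[]; rewrite /= ?g12g12 ?mul0r ?eps_g12 ?g12_eps ?g12g21;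
    [apply: closure0 | apply: closure0 | apply: closure_f1 | apply: closure0].
- by case=> -[]; rewrite /= ?eps_g21 ?mul0r ?g12g21 ?f1_eps ?f1g21;
    [apply: closure0 | apply: closure_f1 | apply: closure0 | apply: closure0].
Qed.

End FusionAlgebra.

Lemma natr_negb (R : pzRingType) (b : bool) : (~~ b)%:R = 1 - b%:R :> R.
Proof. by case: b; rewrite ?subrr ?subr0. Qed.

Section FusionBrackets.
Variables (K : fieldType) (A : algType K) (N : nat) (e : nat -> A).
Hypothesis hN : (2 <= N)%N.
Hypothesis he : idempotent_system N e.
Variables (Abar : algType K) (iota : A -> Abar) (g12 g21 : Abar).
Hypothesis hfus : is_fusion_product (e 1%N) (e 2%N) iota g12 g21.
Variables (br : A -> A -> tens2 A) (ind : Abar -> Abar -> tens2 Abar).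
Hypothesis hind : double_bracket (inAf e iota) (inBf N e iota) ind.
Hypothesis hindgen : ind_on_generators e iota g12 g21 br ind.
Variables (E1 E2 : Abar -> tens2 Abar).
Hypothesis hE1 : double_derivation (inAf e iota) (inBf N e iota) E1.
Hypothesis hE1gen : TrE1_on_generators e iota g12 g21 E1.
Hypothesis hE2 : double_derivation (inAf e iota) (inBf N e iota) E2.
Hypothesis hE2gen : TrE2_on_generators e iota g12 g21 E2.

Local Notation eps := (epsf e iota).
Local Notation f1 := (iota (e 1%N)).
Local Notation in_corner := (in_corner eps).
Local Notation gen := (gen e iota g12 g21).
Local Notation ep := (eplus e iota g12).
Local Notation em := (eminus e iota g21).
Local Notation F := (fus_bracket E1 E2).
Local Notation eps_idem := (eps_idem hN he hfus).
Local Notation in_corner_f1 := (in_corner_f1 hN he hfus).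
Local Notation f1_idem := (f1_idem hN he hfus).
Local Notation in_corner_gen := (in_corner_gen hN he hfus).
Local Notation gen_normal := (gen_normal hN he hfus).
Local Notation corner_normal := (corner_normal hN he).

Variable U : lmodType K.
Implicit Type h : Abar -> Abar -> U.

Lemma teval_TrE1_gen sp sm x h : corner e sp sm x -> corner_bilinear eps h ->
  teval2 (E1 (gen sp sm x)) h =
  (~~ sm)%:R *: h (gen sp sm x * f1) f1 - (~~ sp)%:R *: h f1 (f1 * gen sp sm x).
Proof.
move=> cx bh; have cg := in_corner_gen sp sm x.
have [cf cf'] := (in_corner_f1, in_cornerN in_corner_f1).
have [cgf cfg] := (in_cornerM eps_idem cg cf, in_cornerM eps_idem cf cg).
have [cE E1g] := (corner_deriv hE1 cg, hE1gen cx).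
case: sp sm x cx cg cgf cfg cE E1g => -[] x cx cg cgf cfg cE /= E1g;
  rewrite (teq2_teval_corner (eps := eps) E1g) //; try by repeat apply: corner_tensor_cons.
all: rewrite ?teval2_cons ?teval2_nil ?(corner_bilinearNl bh) //=.
all: by rewrite ?scale1r ?scale0r ?subr0 ?sub0r ?addr0.
Qed.

Lemma teval_TrE2_gen sp sm x h : corner e sp sm x -> corner_bilinear eps h ->
  teval2 (E2 (gen sp sm x)) h =
  sm%:R *: h (gen sp sm x * f1) f1 - sp%:R *: h f1 (f1 * gen sp sm x).
Proof.
move=> cx bh; have cg := in_corner_gen sp sm x.
have [cf cf'] := (in_corner_f1, in_cornerN in_corner_f1).
have [cgf cfg] := (in_cornerM eps_idem cg cf, in_cornerM eps_idem cf cg).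
have [cE E2g] := (corner_deriv hE2 cg, hE2gen cx).
case: sp sm x cx cg cgf cfg cE E2g => -[] x cx cg cgf cfg cE /= E2g;
  rewrite (teq2_teval_corner (eps := eps) E2g) //; try by repeat apply: corner_tensor_cons.
all: rewrite ?teval2_cons ?teval2_nil ?(corner_bilinearNl bh) ?(gen_f1 hfus) ?(f1_gen hfus) //=.
all: by rewrite ?scale1r ?scale0r ?subr0 ?sub0r ?addr0.
Qed.

Lemma teval2_mixed_prod_f1 (Ea Eb : Abar -> tens2 Abar) (a1 a2 b1 b2 : K) X Y h :
  in_corner X -> in_corner Y -> corner_bilinear eps h -> corner_tensor eps (Ea X) ->
  (forall h', corner_bilinear eps h' ->
     teval2 (Ea X) h' = a1 *: h' (X * f1) f1 - a2 *: h' f1 (f1 * X)) ->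
  (forall h', corner_bilinear eps h' ->
     teval2 (Eb Y) h' = b1 *: h' (Y * f1) f1 - b2 *: h' f1 (f1 * Y)) ->
  teval2 (mixed_prod (Ea X) (Eb Y)) h =
    a1 *: (b1 *: h (Y * f1) (X * f1) - b2 *: h f1 (X * f1 * Y))
  - a2 *: (b1 *: h (Y * f1 * X) f1 - b2 *: h (f1 * X) (f1 * Y)).
Proof.
move=> cX cY bh cEa EaX EbY; have cf := in_corner_f1.
have [cYf cfY] := (in_cornerM eps_idem cY cf, in_cornerM eps_idem cf cY).
rewrite teval2_mixed_prod (eq_in_teval2 (h' := fun p1 p2 =>
    b1 *: h (Y * f1 * p2) (p1 * f1) - b2 *: h (f1 * p2) (p1 * (f1 * Y)))); last first.
  move=> p /cEa [c1 c2]; rewrite EbY //.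
  exact: (corner_bilinear_mixed_inner eps_idem).
rewrite EaX; last first.
  apply: corner_bilinearD; [|apply: corner_bilinearN]; apply: corner_bilinearZ;
    exact: (corner_bilinear_mixed_outer eps_idem).
have f1_idemr z : z * f1 * f1 = z * f1 by rewrite -mulrA f1_idem.
by rewrite !mulrA !f1_idemr !f1_idem.
Qed.

Lemma teval_fus_gen sp sm x tp tm y h :
  corner e sp sm x -> corner e tp tm y -> corner_bilinear eps h ->
  teval2 (F (gen sp sm x) (gen tp tm y)) h =
  2%:R^-1 *: ((sm%:R - tm%:R) *: h (gen tp tm y * f1) (gen sp sm x * f1)
            + (tp%:R - sm%:R) *: h f1 (gen sp sm x * f1 * gen tp tm y)
            + (tm%:R - sp%:R) *: h (gen tp tm y * f1 * gen sp sm x) f1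
            + (sp%:R - tp%:R) *: h (f1 * gen sp sm x) (f1 * gen tp tm y)).
Proof.
move=> cx cy bh; have [cX cY] := (in_corner_gen sp sm x, in_corner_gen tp tm y).
rewrite (teval2_fus_corner eps_idem hE1 hE2) //.
have [cE1X cE2X] := (corner_deriv hE1 cX, corner_deriv hE2 cX).
rewrite (teval2_mixed_prod_f1 (a1 := (~~ sm)%:R) (a2 := (~~ sp)%:R) (b1 := tm%:R) (b2 := tp%:R)) //;
  [| by move=> h' bh'; apply: teval_TrE1_gen | by move=> h' bh'; apply: teval_TrE2_gen].
rewrite (teval2_mixed_prod_f1 (a1 := sm%:R) (a2 := sp%:R) (b1 := (~~ tm)%:R) (b2 := (~~ tp)%:R)) //;
  [| by move=> h' bh'; apply: teval_TrE2_gen | by move=> h' bh'; apply: teval_TrE1_gen].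
rewrite !natr_negb.
set a1 := h (_ * f1) (_ * f1); set a2 := h f1 _; set a3 := h _ f1; set a4 := h (f1 * _) _.
lincomb [:: a1; a2; a3; a4].
Qed.

Local Notation cycle3 := (@cycle3 K Abar U).

Lemma teval_ind_f1 a h : in_corner a -> corner_bilinear eps h -> teval2 (ind a f1) h = 0.
Proof.
move=> ca bh; apply: (teval_bracket_base hind) => //; first exact: in_corner_f1.
by right; apply: inBf_f1.
Qed.

Lemma teval_ind_mulf1 a c h : in_corner a -> in_corner c -> corner_bilinear eps h ->
  teval2 (ind a (c * f1)) h = teval2 (ind a c) (fun u v => h u (v * f1)).
Proof.
move=> ca cc bh; rewrite (teval_bracketMr eps_idem hind) //; last exact: in_corner_f1.
by rewrite teval_ind_f1 ?addr0 //; apply: (corner_bilinear_mull eps_idem) => //; apply: in_corner_f1.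
Qed.

Lemma teval_ind_f1mul a b h : in_corner a -> in_corner b -> corner_bilinear eps h ->
  teval2 (ind a (f1 * b)) h = teval2 (ind a b) (fun u v => h (f1 * u) v).
Proof.
move=> ca cb bh; rewrite (teval_bracketMr eps_idem hind) //; last exact: in_corner_f1.
by rewrite teval_ind_f1 ?add0r //; apply: (corner_bilinear_mulr eps_idem) => //; apply: in_corner_f1.
Qed.

Local Notation trilinear_bil12 := (@trilinear_bil12 K Abar U).

(* The parts of [sweedler_eval ind a (F b c) f] containing [{{a, b}}_ind] and
   [{{a, c}}_ind] respectively, for generators [b], [c] with signs [tp tm],
   [up um]. *)
Definition ind_fus_ab (a b c : Abar) (tp up um : bool) (f : Abar -> Abar -> Abar -> U) : U :=
  2%:R^-1 *: teval2 (ind a b) (fun w v =>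
    (um%:R - tp%:R) *: f (c * f1 * w) v f1 + (tp%:R - up%:R) *: f (f1 * w) v (f1 * c)).
Definition ind_fus_ac (a b c : Abar) (tm tp um : bool) (f : Abar -> Abar -> Abar -> U) : U :=
  2%:R^-1 *: teval2 (ind a c) (fun w v =>
    (tm%:R - um%:R) *: f w (v * f1) (b * f1) + (um%:R - tp%:R) *: f w (v * f1 * b) f1).

Lemma sweedler_ind_fus_gen sp sm x tp tm y up um z f :
  corner e sp sm x -> corner e tp tm y -> corner e up um z -> trilinear_map f ->
  sweedler_eval ind (gen sp sm x) (F (gen tp tm y) (gen up um z)) f =
  ind_fus_ab (gen sp sm x) (gen tp tm y) (gen up um z) tp up um f +
  ind_fus_ac (gen sp sm x) (gen tp tm y) (gen up um z) tm tp um f.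
Proof.
move=> cx cy cz tf.
rewrite /sweedler_eval (teval_fus_gen cy cz); last first.
  by apply: (corner_bilinear_sweedler eps_idem hind) => //; apply: in_corner_gen.
move: (gen sp sm x) (in_corner_gen sp sm x) => a ca.
move: (gen tp tm y) (in_corner_gen tp tm y) => b cb.
move: (gen up um z) (in_corner_gen up um z) => c cc.
have cf := in_corner_f1; have ccf := in_cornerM eps_idem cc cf.
have bil3 w : corner_bilinear eps (fun u v => f u v w).
  by apply: bilinear_corner; apply: trilinear_bil12.
rewrite (teval_ind_mulf1 ca cc (bil3 _)) (teval_ind_f1 ca (bil3 _)).
rewrite (teval_bracketMr eps_idem hind ca ccf cb (bil3 _)) (teval_ind_f1mul ca cb (bil3 _)).
rewrite (teval_ind_mulf1 (h := fun u v => f u (v * b) f1) ca cc); last first.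
  exact: (corner_bilinear_mulr eps_idem (bil3 f1) cb).
rewrite /ind_fus_ab /ind_fus_ac !teval2D !teval2Z.
set A1 := teval2 (ind a c) (fun u v => f u (v * f1) (b * f1)).
set A2 := teval2 (ind a c) (fun u v => f u (v * f1 * b) f1).
set B1 := teval2 (ind a b) (fun u v => f (c * f1 * u) v f1).
set B2 := teval2 (ind a b) (fun u v => f (f1 * u) v (f1 * c)).
rewrite ?scaler0 ?addr0.
lincomb [:: A1; A2; B1; B2].
Qed.

Lemma sweedler_fus_ind_gen sp sm x tp tm y up um z f :
  corner e sp sm x -> corner e tp tm y -> corner e up um z -> trilinear_map f ->
  sweedler_eval F (gen up um z) (ind (gen sp sm x) (gen tp tm y)) (cycle3 (cycle3 f)) =
  teval2 (ind (gen sp sm x) (gen tp tm y)) (fun w v => 2%:R^-1 *: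
     ((um%:R - sm%:R) *: f (gen up um z * f1) v (w * f1)
    + (tp%:R - um%:R) *: f (gen up um z * f1 * w) v f1
    + (sm%:R - up%:R) *: f f1 v (w * f1 * gen up um z)
    + (up%:R - tp%:R) *: f (f1 * w) v (f1 * gen up um z))).
Proof.
move=> cx cy cz tf; have cc := in_corner_gen up um z; set c := gen up um z.
have id_lin : linear_map (@id Abar) by [].
have bil : bilinear_map (fun w v => 2%:R^-1 *:
     ((um%:R - sm%:R) *: f (c * f1) v (w * f1) + (tp%:R - um%:R) *: f (c * f1 * w) v f1
    + (sm%:R - up%:R) *: f f1 v (w * f1 * c) + (up%:R - tp%:R) *: f (f1 * w) v (f1 * c))).
  have lin3 : linear_map (fun w => w * f1 * c) by move=> k u w; rewrite !mulrDl -!scalerAl.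
  apply: bilinearZ; apply: bilinearD; [apply: bilinearD; [apply: bilinearD|] |]; apply: bilinearZ.
  - exact: bilinear_comp (bilinear_flip (trilinear_bil23 tf _)) (linear_mulr f1) id_lin.
  - exact: bilinear_comp (trilinear_bil12 tf f1) (linear_mull _) id_lin.
  - exact: bilinear_comp (bilinear_flip (trilinear_bil23 tf f1)) lin3 id_lin.
  - exact: bilinear_comp (trilinear_bil12 tf _) (linear_mull f1) id_lin.
have ind_gen := hindgen cx cy.
have c_list :
    corner_tensor eps [seq (ep tp * iota p.1 * em sm, ep sp * iota p.2 * em tm) | p <- br x y].
  by move=> q /mapP[p _ ->]; rewrite !gen_normal; split; apply: in_corner_gen.
have c_ind : corner_tensor eps (ind (gen sp sm x) (gen tp tm y)).
  by apply: (corner_bracket hind); apply: in_corner_gen.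
rewrite /sweedler_eval (teq2_teval_corner (eps := eps) ind_gen) //; last first.
  apply: (corner_bilinear_sweedler eps_idem (fus_double_bracket eps_idem hE1 hE2) cc).
  by do 2 apply: trilinear_rot.
rewrite [RHS](teq2_teval_corner (eps := eps) ind_gen) //; last exact: bilinear_corner.
apply: eq_in_teval2 => q /mapP[p _ ->] /=; rewrite !gen_normal teval_fus_gen //.
- exact: corner_normal.
- apply: bilinear_corner; apply: bilinear_flip; exact: trilinear_bil13.
Qed.

(* The cross terms of [kappa] containing [{{a, b}}_ind] cancel. *)
Lemma ind_terms_cancel sp sm x tp tm y up um z f :
  corner e sp sm x -> corner e tp tm y -> corner e up um z -> trilinear_map f ->
  ind_fus_ab (gen sp sm x) (gen tp tm y) (gen up um z) tp up um f
  + ind_fus_ac (gen tp tm y) (gen up um z) (gen sp sm x) um up sm (cycle3 f)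
  + sweedler_eval F (gen up um z) (ind (gen sp sm x) (gen tp tm y)) (cycle3 (cycle3 f)) = 0.
Proof.
move=> cx cy cz tf; rewrite sweedler_fus_ind_gen // /ind_fus_ab /ind_fus_ac.
have [ca cb] := (in_corner_gen sp sm x, in_corner_gen tp tm y).
rewrite (teval_bracket_skew hind cb ca); last first.
  have id_lin : linear_map (@id Abar) by [].
  have lin2 : linear_map (fun v => v * f1 * gen up um z) by move=> k u w; rewrite !mulrDl -!scalerAl.
  apply: bilinear_corner; apply: bilinearD; apply: bilinearZ.
  - exact: bilinear_comp (trilinear_bil23 tf _) id_lin (linear_mulr f1).
  - exact: bilinear_comp (trilinear_bil23 tf f1) id_lin lin2.
move: (gen sp sm x) (gen tp tm y) (gen up um z) => a b c.
rewrite /cycle3 -!teval2Z -teval2N -teval2Z -!teval2D -(teval2_0 U (ind a b)).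
apply: eq_teval2 => w v.
set A1 := f (c * f1 * w) v f1; set A2 := f (f1 * w) v (f1 * c).
set A3 := f (c * f1) v (w * f1); set A4 := f f1 v (w * f1 * c).
lincomb [:: A1; A2; A3; A4].
Qed.

Lemma kappa_eval_gen sp sm x tp tm y up um z (f : Abar -> Abar -> Abar -> U) :
  corner e sp sm x -> corner e tp tm y -> corner e up um z -> trilinear_map f ->
  teval3 (kappa ind F (gen sp sm x) (gen tp tm y) (gen up um z)) f = 0.
Proof.
move=> cx cy cz tf; have tf1 : trilinear_map (cycle3 f) := trilinear_rot tf.
have tf2 : trilinear_map (cycle3 (cycle3 f)) := trilinear_rot tf1.
have cycle3K g : cycle3 (cycle3 (cycle3 g)) = g by [].
have := ind_terms_cancel cx cy cz tf; have := ind_terms_cancel cy cz cx tf1.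
have := ind_terms_cancel cz cx cy tf2; rewrite (cycle3K f).
rewrite kappa_eval_cross // (sweedler_ind_fus_gen cx cy cz tf) (sweedler_ind_fus_gen cy cz cx tf1).
rewrite (sweedler_ind_fus_gen cz cx cy tf2).
move: (gen sp sm x) (gen tp tm y) (gen up um z) => a b c C3 C2 C1.
rewrite -[RHS]addr0 -[RHS]addr0 -{1}C1 -{1}C2 -{1}C3.
set T1 := ind_fus_ab a b c _ _ _ _; set T2 := ind_fus_ac b c a _ _ _ _; set T3 := sweedler_eval F c _ _.
set T4 := ind_fus_ab b c a _ _ _ _; set T5 := ind_fus_ac c a b _ _ _ _; set T6 := sweedler_eval F a _ _.
set T7 := ind_fus_ab c a b _ _ _ _; set T8 := ind_fus_ac a b c _ _ _ _; set T9 := sweedler_eval F b _ _.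
lincomb [:: T1; T2; T3; T4; T5; T6; T7; T8; T9].
Qed.

End FusionBrackets.

Theorem lemma2p20 (K : fieldType) (charK0 : [pchar K] =i pred0)
  (A : algType K) (N : nat) (hN : (2 <= N)%N) (e : nat -> A)
  (he : idempotent_system N e)
  (br : A -> A -> tens2 A)
  (hbr : double_bracket (fun _ => True) (inB N e) br)
  (Abar : algType K) (iota : A -> Abar) (g12 g21 : Abar)
  (hfus : is_fusion_product (e 1%N) (e 2%N) iota g12 g21)
  (ind : Abar -> Abar -> tens2 Abar)
  (hind : double_bracket (inAf e iota) (inBf N e iota) ind)
  (hindgen : ind_on_generators e iota g12 g21 br ind)
  (E1 E2 : Abar -> tens2 Abar)
  (hE1 : double_derivation (inAf e iota) (inBf N e iota) E1)
  (hE1gen : TrE1_on_generators e iota g12 g21 E1)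
  (hE2 : double_derivation (inAf e iota) (inBf N e iota) E2)
  (hE2gen : TrE2_on_generators e iota g12 g21 E2) :
  forall a b c : Abar, inAf e iota a -> inAf e iota b -> inAf e iota c ->
    tzero3 (kappa ind (fus_bracket E1 E2) a b c).
Proof.
have eps_idem := eps_idem hN he hfus.
have gen_corner x : fusion_gen e iota g12 g21 x -> in_corner (epsf e iota) x.
  by move=> [sp [sm [alpha [_ ->]]]]; apply: (in_corner_gen hN he hfus).
move=> a b c ca cb cc.
apply: (tzero3_kappa_closure eps_idem hind (fus_double_bracket eps_idem hE1 hE2) gen_corner);
  try exact: (closure_corner hN he hfus).
move=> x y z [sp [sm [alpha [calpha ->]]]] [tp [tm [beta [cbeta ->]]]] [up [um [gamma [cgamma ->]]]].
move=> U f tf; exact: (kappa_eval_gen hN he hfus hind hindgen hE1 hE1gen hE2 hE2gen).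
Qed.
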